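(* Let $\mathbb{D}=\{z\in\mathbb{C}:|z|<1\}$ and let $F:\mathbb{D}\to\mathbb{C}$ be a function (no regularity assumed) such that $0\le \operatorname{Re}F(z)\le 1$ for all $z\in\mathbb{D}$ and such that the function $z\mapsto F(z)+z\overline{F(z)}$ is holomorphic on $\mathbb{D}$. Then $F$ is constant.
   Context: $\operatorname{Re}$ denotes the real part of a complex number and $\overline{w}$ the complex conjugate of $w$. *)

From Stdlib Require Import Reals.
From Coquelicot Require Import Coquelicot.
Open Scope R_scope.

Definition in_disc (z : C) : Prop := Cmod z < 1.

Definition holomorphic_on_disc (g : C -> C) : Prop :=
  forall z : C, in_disc z -> ex_derive (K := C_AbsRing) (V := C_NormedModule) g z.

(* G := F + z conj F is holomorphic and Re ((1 - conj w) G w) = (1 - |w|^2) Re (F w) lies in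
   [0, 1 - |w|^2].  Write 2 pi G = sum a_k z^k.  On the circle |w| = rho, the Fourier coefficients
   of this real part are combinations of the a_k rho^k, and they are O(1 - rho); letting rho -> 1
   yields a_(k+1) = a_k for k >= 2, a_1 = a_2 + conj a_0 and Re a_0 = Re a_1.  Hence
   2 pi G z = a_0 + a_1 z + a_2 z^2 / (1 - z), so f := F z - F 0 satisfies
   2 pi (f + z conj f) = a_2 z / (1 - z) with Re a_2 = 0.  Taking real parts at z = 1 - t + i t,
   where 1 - |z|^2 = 2 t (1 - t), gives |Im a_2| <= 4 pi t for all small t, so a_2 = 0; finally
   f + z conj f = 0 with |z| < 1 forces f = 0.
   The power series of G comes from the Cauchy integral formula, itself obtained from Goursat's
   lemma for the regions swept out by a linear family of circles. *)

From Stdlib Require Import Reals Lra Lia.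
From Coquelicot Require Import Coquelicot.
Open Scope R_scope.

Notation ccontinuous := (@continuous R_UniformSpace C_UniformSpace).

Definition ccontinuous_on (f : R -> C) (a b : R) : Prop :=
  forall x, a <= x <= b -> ccontinuous f x.

Definition CInt (f : R -> C) (a b : R) : C :=
  (RInt (fun t => Re (f t)) a b, RInt (fun t => Im (f t)) a b).

Lemma Re_CInt f a b : Re (CInt f a b) = RInt (fun t => Re (f t)) a b.
Proof. reflexivity. Qed.

Lemma Im_CInt f a b : Im (CInt f a b) = RInt (fun t => Im (f t)) a b.
Proof. reflexivity. Qed.

Lemma continuous_Re_comp (f : R -> C) x : ccontinuous f x -> continuous (fun t => Re (f t)) x.
Proof.
  intros H. apply (continuous_comp f fst); auto.
  unfold Re. destruct (f x). apply continuous_fst.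
Qed.

Lemma continuous_Im_comp (f : R -> C) x : ccontinuous f x -> continuous (fun t => Im (f t)) x.
Proof.
  intros H. apply (continuous_comp f snd); auto.
  unfold Im. destruct (f x). apply continuous_snd.
Qed.

Lemma ccontinuous_parts (f : R -> C) x :
  continuous (fun t => Re (f t)) x -> continuous (fun t => Im (f t)) x -> ccontinuous f x.
Proof.
  intros H1 H2. apply filterlim_locally. intros eps.
  apply filterlim_locally with (eps := eps) in H1.
  apply filterlim_locally with (eps := eps) in H2.
  eapply filter_imp; [|exact (filter_and _ _ H1 H2)].
  intros t. unfold Re, Im. destruct (f x), (f t). intros [A B]. split; assumption.
Qed.

Lemma ccontinuous_const (c : C) x : ccontinuous (fun _ => c) x.
Proof. apply continuous_const. Qed.

Lemma ccontinuous_RtoC (u : R -> R) x : continuous u x -> ccontinuous (fun t => RtoC (u t)) x.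
Proof. intros H. apply ccontinuous_parts; [exact H | apply continuous_const]. Qed.

Lemma ccontinuous_plus (f g : R -> C) x : ccontinuous f x -> ccontinuous g x ->
  ccontinuous (fun t => (f t + g t)%C) x.
Proof.
  intros Hf Hg. apply ccontinuous_parts.
  - apply (@continuous_plus R_UniformSpace R_AbsRing R_NormedModule (fun t => Re (f t)) (fun t => Re (g t)));
      apply continuous_Re_comp; assumption.
  - apply (@continuous_plus R_UniformSpace R_AbsRing R_NormedModule (fun t => Im (f t)) (fun t => Im (g t)));
      apply continuous_Im_comp; assumption.
Qed.

Lemma ccontinuous_mult (f g : R -> C) x : ccontinuous f x -> ccontinuous g x ->
  ccontinuous (fun t => (f t * g t)%C) x.
Proof.
  intros Hf Hg.
  pose proof (continuous_Re_comp f x Hf). pose proof (continuous_Im_comp f x Hf).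
  pose proof (continuous_Re_comp g x Hg). pose proof (continuous_Im_comp g x Hg).
  apply ccontinuous_parts.
  - apply continuous_ext with
      (f := fun t => minus (mult (Re (f t)) (Re (g t))) (mult (Im (f t)) (Im (g t)))); [reflexivity|].
    apply (@continuous_minus R_UniformSpace R_AbsRing R_NormedModule);
      apply (@continuous_mult R_UniformSpace R_AbsRing); assumption.
  - apply continuous_ext with
      (f := fun t => plus (mult (Re (f t)) (Im (g t))) (mult (Im (f t)) (Re (g t)))); [reflexivity|].
    apply (@continuous_plus R_UniformSpace R_AbsRing R_NormedModule);
      apply (@continuous_mult R_UniformSpace R_AbsRing); assumption.
Qed.

Lemma ccontinuous_scal (c : C) (f : R -> C) x : ccontinuous f x -> ccontinuous (fun t => (c * f t)%C) x.
Proof. intros Hf. apply ccontinuous_mult; [apply ccontinuous_const | exact Hf]. Qed.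

Lemma ccontinuous_minus (f g : R -> C) x : ccontinuous f x -> ccontinuous g x ->
  ccontinuous (fun t => (f t - g t)%C) x.
Proof.
  intros Hf Hg. apply continuous_ext with (f := fun t => (f t + (-1) * g t)%C).
  { intros t; simpl; ring. }
  apply ccontinuous_plus; [exact Hf | apply ccontinuous_scal, Hg].
Qed.

Lemma ccontinuous_conj (f : R -> C) x : ccontinuous f x -> ccontinuous (fun t => Cconj (f t)) x.
Proof.
  intros H. apply ccontinuous_parts.
  - exact (continuous_Re_comp f x H).
  - exact (@continuous_opp R_UniformSpace R_AbsRing R_NormedModule _ x (continuous_Im_comp f x H)).
Qed.

Lemma ex_RInt_Re (f : R -> C) a b : a <= b -> ccontinuous_on f a b -> ex_RInt (fun t => Re (f t)) a b.
Proof.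
  intros Hab H. apply (@ex_RInt_continuous R_CompleteNormedModule). intros x Hx.
  rewrite Rmin_left, Rmax_right in Hx by lra. apply continuous_Re_comp, H, Hx.
Qed.

Lemma ex_RInt_Im (f : R -> C) a b : a <= b -> ccontinuous_on f a b -> ex_RInt (fun t => Im (f t)) a b.
Proof.
  intros Hab H. apply (@ex_RInt_continuous R_CompleteNormedModule). intros x Hx.
  rewrite Rmin_left, Rmax_right in Hx by lra. apply continuous_Im_comp, H, Hx.
Qed.

Lemma RInt_lin2 (f g : R -> R) (p q a b : R) : ex_RInt f a b -> ex_RInt g a b ->
  RInt (fun t => p * f t + q * g t) a b = p * RInt f a b + q * RInt g a b.
Proof.
  intros Hf Hg.
  rewrite (@RInt_plus R_CompleteNormedModule (fun t => scal p (f t)) (fun t => scal q (g t))).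
  - rewrite !(@RInt_scal R_CompleteNormedModule); auto.
  - apply (@ex_RInt_scal R_CompleteNormedModule); auto.
  - apply (@ex_RInt_scal R_CompleteNormedModule); auto.
Qed.

Lemma CInt_ext f g a b : a <= b -> (forall x, a <= x <= b -> f x = g x) -> CInt f a b = CInt g a b.
Proof.
  intros Hab H. unfold CInt. f_equal; apply RInt_ext; intros x Hx;
    rewrite Rmin_left, Rmax_right in Hx by lra; rewrite H; auto; lra.
Qed.

Lemma CInt_const c a b : CInt (fun _ => c) a b = (RtoC (b - a) * c)%C.
Proof.
  unfold CInt. rewrite !RInt_const. destruct c.
  unfold scal, RtoC, Cmult, Re, Im; simpl; unfold mult; simpl. f_equal; ring.
Qed.

Lemma CInt_plus f g a b : a <= b -> ccontinuous_on f a b -> ccontinuous_on g a b ->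
  CInt (fun t => (f t + g t)%C) a b = (CInt f a b + CInt g a b)%C.
Proof.
  intros Hab Hf Hg. unfold CInt, Cplus; simpl. f_equal.
  - apply (RInt_plus (fun t => Re (f t))); apply ex_RInt_Re; auto.
  - apply (RInt_plus (fun t => Im (f t))); apply ex_RInt_Im; auto.
Qed.

Lemma CInt_scal (c : C) f a b : a <= b -> ccontinuous_on f a b ->
  CInt (fun t => (c * f t)%C) a b = (c * CInt f a b)%C.
Proof.
  intros Hab Hf. unfold CInt.
  pose proof (ex_RInt_Re f a b Hab Hf). pose proof (ex_RInt_Im f a b Hab Hf).
  rewrite (RInt_ext _ (fun t => Re c * Re (f t) + (- Im c) * Im (f t)))
    by (intros; destruct c; unfold Re, Im, Cmult; simpl; ring).
  rewrite (RInt_ext (fun t => Im _) (fun t => Re c * Im (f t) + Im c * Re (f t)))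
    by (intros; destruct c; unfold Re, Im, Cmult; simpl; ring).
  rewrite !RInt_lin2 by auto.
  destruct c. unfold Cmult, Re, Im; simpl. f_equal; ring.
Qed.

Lemma CInt_minus f g a b : a <= b -> ccontinuous_on f a b -> ccontinuous_on g a b ->
  CInt (fun t => (f t - g t)%C) a b = (CInt f a b - CInt g a b)%C.
Proof.
  intros Hab Hf Hg.
  assert (Hg' : ccontinuous_on (fun t => (-1 * g t)%C) a b)
    by (intros x Hx; apply ccontinuous_scal, Hg, Hx).
  rewrite (CInt_ext _ (fun t => (f t + -1 * g t)%C)) by (auto; intros; ring).
  rewrite CInt_plus, CInt_scal by auto. ring.
Qed.

Lemma CInt_Chasles f a b c : a <= b -> b <= c -> ccontinuous_on f a c ->
  (CInt f a b + CInt f b c)%C = CInt f a c.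
Proof.
  intros Hab Hbc Hf.
  assert (ccontinuous_on f a b) by (intros x Hx; apply Hf; lra).
  assert (ccontinuous_on f b c) by (intros x Hx; apply Hf; lra).
  unfold CInt, Cplus; simpl. f_equal.
  - apply (RInt_Chasles (fun t => Re (f t))); apply ex_RInt_Re; auto.
  - apply (RInt_Chasles (fun t => Im (f t))); apply ex_RInt_Im; auto.
Qed.

Lemma CInt_conj f a b : a <= b -> ccontinuous_on f a b ->
  CInt (fun t => Cconj (f t)) a b = Cconj (CInt f a b).
Proof.
  intros Hab Hf. unfold CInt, Cconj; simpl. f_equal.
  rewrite <- (RInt_opp (V := R_CompleteNormedModule)); [reflexivity|].
  apply ex_RInt_Im; auto.
Qed.

(* The modulus is estimated through the real part of [conj I * f], whose integral is [|I|^2]. *)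
Lemma CInt_norm f a b M : a <= b -> ccontinuous_on f a b ->
  (forall x, a <= x <= b -> Cmod (f x) <= M) -> Cmod (CInt f a b) <= M * (b - a).
Proof.
  intros Hab Hf HM.
  assert (HM0 : 0 <= M) by (pose proof (HM a ltac:(lra)); pose proof (Cmod_ge_0 (f a)); lra).
  pose proof (ex_RInt_Re f a b Hab Hf) as HRe. pose proof (ex_RInt_Im f a b Hab Hf) as HIm.
  remember (CInt f a b) as I eqn:HI.
  destruct (Req_dec (Cmod I) 0) as [H0|H0]; [rewrite H0; nra|].
  assert (Hpos : 0 < Cmod I) by (pose proof (Cmod_ge_0 I); lra).
  apply Rmult_le_reg_l with (Cmod I); [exact Hpos|].
  assert (Hsq : Cmod I * Cmod I = RInt (fun t => Re I * Re (f t) + Im I * Im (f t)) a b).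
  { rewrite (RInt_lin2 (fun t => Re (f t)) (fun t => Im (f t))) by auto.
    rewrite <- Re_CInt, <- Im_CInt, <- HI.
    replace (Cmod I * Cmod I) with (Cmod I ^ 2) by ring. rewrite Cmod2_alt. ring. }
  rewrite Hsq.
  apply Rle_trans with (RInt (fun _ => Cmod I * M) a b).
  - apply RInt_le; [exact Hab | | apply ex_RInt_const |].
    + apply (@ex_RInt_plus R_CompleteNormedModule
               (fun t => scal (Re I) (Re (f t))) (fun t => scal (Im I) (Im (f t))));
        apply (@ex_RInt_scal R_CompleteNormedModule); assumption.
    + intros x Hx.
      replace (Re I * Re (f x) + Im I * Im (f x)) with (Re (Cconj I * f x)%C)
        by (destruct I, (f x); unfold Re, Im, Cconj, Cmult; simpl; ring).
      eapply Rle_trans; [apply Rle_abs|]. eapply Rle_trans; [apply re_le_Cmod|].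
      rewrite Cmod_mult, Cmod_conj. apply Rmult_le_compat_l; [lra | apply HM; lra].
  - rewrite RInt_const. unfold scal; simpl; unfold mult; simpl. lra.
Qed.

Definition is_cderive (g : R -> C) (x : R) (d : C) : Prop :=
  is_derive (fun t => Re (g t)) x (Re d) /\ is_derive (fun t => Im (g t)) x (Im d).

Lemma CInt_derive (P f : R -> C) a b : a <= b -> ccontinuous_on f a b ->
  (forall x, a <= x <= b -> is_cderive P x (f x)) -> CInt f a b = (P b - P a)%C.
Proof.
  intros Hab Hf HD. unfold CInt.
  assert (A1 : is_RInt (fun t => Re (f t)) a b (minus (Re (P b)) (Re (P a)))).
  { apply (@is_RInt_derive R_CompleteNormedModule (fun t => Re (P t)));
      intros x Hx; rewrite Rmin_left, Rmax_right in Hx by lra.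
    - apply HD; lra.
    - apply continuous_Re_comp, Hf; lra. }
  assert (A2 : is_RInt (fun t => Im (f t)) a b (minus (Im (P b)) (Im (P a)))).
  { apply (@is_RInt_derive R_CompleteNormedModule (fun t => Im (P t)));
      intros x Hx; rewrite Rmin_left, Rmax_right in Hx by lra.
    - apply HD; lra.
    - apply continuous_Im_comp, Hf; lra. }
  apply (@is_RInt_unique R_CompleteNormedModule) in A1.
  apply (@is_RInt_unique R_CompleteNormedModule) in A2.
  rewrite A1, A2.
  destruct (P a), (P b). unfold Cminus, Cplus, Copp, minus, plus, opp, Re, Im; simpl. f_equal; ring.
Qed.

Lemma is_cderive_eq g x d d' : is_cderive g x d -> d = d' -> is_cderive g x d'.
Proof. intros H <-. exact H. Qed.

Lemma is_cderive_const c x : is_cderive (fun _ => c) x 0%C.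
Proof. split; apply (@is_derive_const R_AbsRing R_NormedModule). Qed.

Lemma is_cderive_RtoC (u : R -> R) x d : is_derive u x d -> is_cderive (fun t => RtoC (u t)) x (RtoC d).
Proof. intros H. split; simpl; [exact H | apply (@is_derive_const R_AbsRing R_NormedModule)]. Qed.

Lemma is_cderive_plus g h x dg dh : is_cderive g x dg -> is_cderive h x dh ->
  is_cderive (fun t => (g t + h t)%C) x (dg + dh)%C.
Proof.
  intros [A B] [C D]. split.
  - apply (@is_derive_plus R_AbsRing R_NormedModule (fun t => Re (g t)) (fun t => Re (h t))); auto.
  - apply (@is_derive_plus R_AbsRing R_NormedModule (fun t => Im (g t)) (fun t => Im (h t))); auto.
Qed.

Lemma is_derive_Rmult (u v : R -> R) x du dv : is_derive u x du -> is_derive v x dv ->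
  is_derive (fun t => u t * v t) x (du * v x + u x * dv).
Proof. intros. apply (is_derive_mult u v x du dv); auto. intros; apply Rmult_comm. Qed.

Lemma is_cderive_mult g h x dg dh : is_cderive g x dg -> is_cderive h x dh ->
  is_cderive (fun t => (g t * h t)%C) x (dg * h x + g x * dh)%C.
Proof.
  intros [A B] [C D]. split.
  - eapply is_derive_ext with (f := fun t => Re (g t) * Re (h t) + (-1) * (Im (g t) * Im (h t))).
    { intros; unfold Re, Im, Cmult; simpl; ring. }
    replace (Re (dg * h x + g x * dh)%C) with
      ((Re dg * Re (h x) + Re (g x) * Re dh) + (-1) * (Im dg * Im (h x) + Im (g x) * Im dh))
      by (destruct dg, dh, (h x), (g x); unfold Re, Im, Cmult, Cplus; simpl; ring).
    apply (@is_derive_plus R_AbsRing R_NormedModule); [apply is_derive_Rmult; auto|].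
    apply (is_derive_scal (fun t => Im (g t) * Im (h t))). apply is_derive_Rmult; auto.
  - eapply is_derive_ext with (f := fun t => Re (g t) * Im (h t) + Im (g t) * Re (h t)).
    { intros; unfold Re, Im, Cmult; simpl; ring. }
    replace (Im (dg * h x + g x * dh)%C) with
      ((Re dg * Im (h x) + Re (g x) * Im dh) + (Im dg * Re (h x) + Im (g x) * Re dh))
      by (destruct dg, dh, (h x), (g x); unfold Re, Im, Cmult, Cplus; simpl; ring).
    apply (@is_derive_plus R_AbsRing R_NormedModule); apply is_derive_Rmult; auto.
Qed.

Definition cis (t : R) : C := (cos t, sin t).

Lemma Cmod_cis t : Cmod (cis t) = 1.
Proof.
  unfold Cmod, cis; simpl. rewrite !Rmult_1_r.
  pose proof (sin2_cos2 t) as K. unfold Rsqr in K. rewrite Rplus_comm, K. apply sqrt_1.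
Qed.

Lemma cis_neq0 t : cis t <> 0%C.
Proof. intros H. pose proof (Cmod_cis t) as K. rewrite H, Cmod_0 in K. lra. Qed.

Lemma cis_0 : cis 0 = 1%C.
Proof. unfold cis. rewrite cos_0, sin_0. reflexivity. Qed.

Lemma cis_2PI : cis (2 * PI) = 1%C.
Proof. unfold cis. rewrite cos_2PI, sin_2PI. reflexivity. Qed.

Lemma cis_add a b : (cis a * cis b)%C = cis (a + b).
Proof. unfold cis, Cmult; simpl. rewrite cos_plus, sin_plus. f_equal; ring. Qed.

Lemma cis_conj a : Cconj (cis a) = cis (- a).
Proof. unfold cis, Cconj; simpl. rewrite cos_neg, sin_neg. reflexivity. Qed.

Lemma cis_inv a : (/ cis a)%C = cis (- a).
Proof.
  assert (K : (cis a * cis (- a))%C = 1%C) by (rewrite cis_add, Rplus_opp_r; apply cis_0).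
  pose proof (cis_neq0 a). rewrite <- (Cmult_1_r (/ cis a)), <- K. field. assumption.
Qed.

Lemma cis_pow a n : (cis a ^ n)%C = cis (INR n * a).
Proof.
  induction n as [|n IH].
  - simpl. rewrite Rmult_0_l, cis_0. reflexivity.
  - rewrite Cpow_S, IH, cis_add, S_INR. f_equal; ring.
Qed.

Lemma Cmod_scal_cis (r t : R) : 0 <= r -> Cmod (RtoC r * cis t) = r.
Proof. intros H. rewrite Cmod_mult, Cmod_cis, Cmod_R, Rabs_right; lra. Qed.

Lemma Cmod_le_parts (z : C) : Cmod z <= Rabs (Re z) + Rabs (Im z).
Proof.
  pose proof (Rabs_pos (Re z)). pose proof (Rabs_pos (Im z)).
  unfold Cmod. rewrite <- (sqrt_square (Rabs (Re z) + Rabs (Im z))) by lra.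
  apply sqrt_le_1_alt. destruct z as [x y]; unfold Re, Im in *; simpl in *. rewrite !Rmult_1_r.
  unfold Rabs in *; destruct (Rcase_abs x), (Rcase_abs y); nra.
Qed.

Lemma cis_lipschitz a b : Cmod (cis a - cis b) <= 2 * Rabs (a - b).
Proof.
  eapply Rle_trans; [apply Cmod_le_parts|]. unfold cis, Re, Im, Cminus, Cplus, Copp; simpl.
  destruct (MVT_abs cos (fun x => - sin x) b a) as [c [Hc _]]; [intros; apply derivable_pt_lim_cos|].
  destruct (MVT_abs sin cos b a) as [d [Hd _]]; [intros; apply derivable_pt_lim_sin|].
  replace (cos a + - cos b) with (cos a - cos b) by ring.
  replace (sin a + - sin b) with (sin a - sin b) by ring.
  rewrite Hc, Hd, Rabs_Ropp.
  pose proof (SIN_bound c). pose proof (COS_bound d). pose proof (Rabs_pos (a - b)).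
  assert (Rabs (sin c) <= 1) by (apply Rabs_le; lra).
  assert (Rabs (cos d) <= 1) by (apply Rabs_le; lra).
  nra.
Qed.

Lemma is_cderive_cis x : is_cderive cis x (Ci * cis x)%C.
Proof.
  split; unfold cis, Ci, Cmult, Re, Im; simpl.
  - replace (0 * cos x - 1 * sin x) with (- sin x) by ring. apply is_derive_cos.
  - replace (0 * sin x + 1 * cos x) with (cos x) by ring. apply is_derive_sin.
Qed.

Lemma ccontinuous_cis x : ccontinuous cis x.
Proof.
  apply ccontinuous_parts; unfold cis, Re, Im; simpl; apply continuity_pt_filterlim.
  - apply continuity_cos.
  - apply continuity_sin.
Qed.

Lemma ccontinuous_cis_scal (k x : R) : ccontinuous (fun t => cis (k * t)) x.
Proof.
  apply (continuous_comp (fun t => k * t) cis); [|apply ccontinuous_cis].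
  apply (@continuous_scal_r R_UniformSpace R_AbsRing R_NormedModule k (fun t => t)), continuous_id.
Qed.

(** * Complex differentiability *)

Definition Cdiff (H : C -> C) (w l : C) : Prop :=
  forall eps, 0 < eps -> exists del, 0 < del /\ forall y, Cmod (y - w) < del ->
    Cmod (H y - H w - l * (y - w)) <= eps * Cmod (y - w).

Definition Cdifferentiable (H : C -> C) (w : C) : Prop := exists l, Cdiff H w l.

Definition Cdifferentiable_on_disc (G : C -> C) : Prop :=
  forall z, Cmod z < 1 -> Cdifferentiable G z.

Lemma holomorphic_on_disc_Cdiff (G : C -> C) : holomorphic_on_disc G -> Cdifferentiable_on_disc G.
Proof.
  intros HG z Hz. destruct (HG z Hz) as [l [_ Hd]]. exists l. intros eps Heps.
  destruct (Hd z (fun P HP => HP) (mkposreal eps Heps)) as [e He].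
  exists e. split; [apply cond_pos|]. intros y Hy.
  replace (G y - G z - l * (y - z))%C with (minus (minus (G y) (G z)) (scal (minus y z) l))
    by (change (minus (minus (G y) (G z)) (scal (minus y z) l)) with (G y - G z - (y - z) * l)%C;
        rewrite (Cmult_comm (y - z) l); reflexivity).
  exact (He y Hy).
Qed.

Lemma is_derive_Cdiff (g : C -> C) z l :
  @is_derive C_AbsRing (AbsRing_NormedModule C_AbsRing) g z l -> Cdiff g z l.
Proof.
  intros [_ Hd] eps Heps.
  destruct (Hd z (fun P HP => HP) (mkposreal eps Heps)) as [e He].
  exists e. split; [apply cond_pos|]. intros y Hy.
  replace (g y - g z - l * (y - z))%C with (minus (minus (g y) (g z)) (scal (minus y z) l))
    by (change (minus (minus (g y) (g z)) (scal (minus y z) l)) with (g y - g z - (y - z) * l)%C;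
        rewrite (Cmult_comm (y - z) l); reflexivity).
  exact (He y Hy).
Qed.

Lemma Cdiff_is_derive (g : C -> C) z l :
  Cdiff g z l -> @is_derive C_AbsRing (AbsRing_NormedModule C_AbsRing) g z l.
Proof.
  intros HD. split; [apply is_linear_scal_l|].
  intros x Hx. apply (@is_filter_lim_locally_unique C_AbsRing (AbsRing_NormedModule C_AbsRing)) in Hx.
  subst x. intros eps. destruct (HD eps (cond_pos eps)) as [d [Hd Hb]].
  exists (mkposreal d Hd). intros y Hy.
  change (Cmod (g y - g z - (y - z) * l) <= eps * Cmod (y - z)).
  replace (g y - g z - (y - z) * l)%C with (g y - g z - l * (y - z))%C by ring.
  exact (Hb y Hy).
Qed.

Lemma Cdiff_ext f g z l : (forall w, f w = g w) -> Cdiff f z l -> Cdiff g z l.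
Proof.
  intros He H eps Heps. destruct (H eps Heps) as [d [Hd Hb]].
  exists d. split; [exact Hd|]. intros y Hy. rewrite <- !He. auto.
Qed.

Lemma Cdiff_const (c : C) z : Cdiff (fun _ => c) z 0%C.
Proof. apply is_derive_Cdiff, (@is_derive_const C_AbsRing). Qed.

Lemma Cdiff_id z : Cdiff (fun w => w) z 1%C.
Proof. apply is_derive_Cdiff, (@is_derive_id C_AbsRing). Qed.

Lemma Cdiff_plus f g z lf lg : Cdiff f z lf -> Cdiff g z lg ->
  Cdiff (fun w => (f w + g w)%C) z (lf + lg)%C.
Proof.
  intros Hf Hg eps Heps.
  destruct (Hf (eps / 2) ltac:(lra)) as [d1 [Hd1 B1]].
  destruct (Hg (eps / 2) ltac:(lra)) as [d2 [Hd2 B2]].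
  exists (Rmin d1 d2). split; [apply Rmin_glb_lt; assumption|]. intros y Hy.
  pose proof (B1 y (Rlt_le_trans _ _ _ Hy (Rmin_l d1 d2))).
  pose proof (B2 y (Rlt_le_trans _ _ _ Hy (Rmin_r d1 d2))).
  replace (f y + g y - (f z + g z) - (lf + lg) * (y - z))%C
    with ((f y - f z - lf * (y - z)) + (g y - g z - lg * (y - z)))%C by ring.
  eapply Rle_trans; [apply Cmod_triangle | lra].
Qed.

Lemma Cdiff_mult f g z lf lg : Cdiff f z lf -> Cdiff g z lg ->
  Cdiff (fun w => (f w * g w)%C) z (lf * g z + f z * lg)%C.
Proof.
  intros Hf Hg. apply is_derive_Cdiff.
  apply (@is_derive_mult C_AbsRing f g); try apply Cdiff_is_derive; auto.
  intros; apply Cmult_comm.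
Qed.

Lemma Cdiff_small_change G z l : Cdiff G z l -> forall eps, 0 < eps -> exists del, 0 < del /\
  forall w, Cmod (w - z) < del -> Cmod (G w - G z) <= eps.
Proof.
  intros HD eps Heps. destruct (HD 1 Rlt_0_1) as [d [Hd Hb]].
  assert (Hl : 0 < Cmod l + 1) by (pose proof (Cmod_ge_0 l); lra).
  exists (Rmin d (eps / (Cmod l + 1))).
  split; [apply Rmin_glb_lt; [exact Hd | apply Rdiv_lt_0_compat; assumption]|].
  intros w Hw.
  assert (W1 : Cmod (w - z) < d) by (eapply Rlt_le_trans; [apply Hw | apply Rmin_l]).
  assert (W2 : Cmod (w - z) * (Cmod l + 1) <= eps).
  { apply Rle_trans with (eps / (Cmod l + 1) * (Cmod l + 1)); [|right; field; lra].
    apply Rmult_le_compat_r; [lra|]. left. eapply Rlt_le_trans; [apply Hw | apply Rmin_r]. }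
  specialize (Hb w W1).
  replace (G w - G z)%C with ((G w - G z - l * (w - z)) + l * (w - z))%C by ring.
  eapply Rle_trans; [apply Cmod_triangle|]. rewrite Cmod_mult.
  pose proof (Cmod_ge_0 (w - z)). nra.
Qed.

Notation Ccontinuous := (@continuous C_UniformSpace C_UniformSpace).

Lemma Cdiff_continuous H w l : Cdiff H w l -> Ccontinuous H w.
Proof.
  intros HD. apply filterlim_locally. intros eps.
  destruct (Cdiff_small_change H w l HD (eps / 2) ltac:(pose proof (cond_pos eps); lra))
    as [del [Hdel Hb]].
  assert (Hd2 : 0 < del / 2) by lra.
  exists (mkposreal _ Hd2). intros y Hy.
  apply C_NormedModule_mixin_compat1.
  eapply Rle_lt_trans; [apply Hb | pose proof (cond_pos eps); simpl; lra].
  pose proof (C_NormedModule_mixin_compat2 w y (mkposreal _ Hd2) Hy) as K. simpl in K.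
  assert (sqrt 2 < 2) by (rewrite <- (sqrt_square 2) at 2 by lra; apply sqrt_lt_1_alt; lra).
  pose proof (Cmod_ge_0 (y - w)). change (minus y w) with (y - w)%C in K. nra.
Qed.

Lemma Cdifferentiable_continuous H w : Cdifferentiable H w -> Ccontinuous H w.
Proof. intros [l Hl]. exact (Cdiff_continuous H w l Hl). Qed.

Lemma Cdifferentiable_mult f g z : Cdifferentiable f z -> Cdifferentiable g z ->
  Cdifferentiable (fun w => (f w * g w)%C) z.
Proof. intros [lf Hf] [lg Hg]. eexists. apply Cdiff_mult; eassumption. Qed.

Lemma Cdifferentiable_affine (c l : C) z : Cdifferentiable (fun w => (c + l * w)%C) z.
Proof.
  eexists. apply Cdiff_plus; [apply Cdiff_const|]. apply Cdiff_mult; [apply Cdiff_const | apply Cdiff_id].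
Qed.

Lemma Cdifferentiable_pow f z n : Cdifferentiable f z -> Cdifferentiable (fun w => (f w ^ n)%C) z.
Proof.
  intros Hf. induction n as [|n IH]; simpl.
  - exists 0%C. apply Cdiff_const.
  - apply (Cdifferentiable_mult f (fun w => (f w ^ n)%C)); assumption.
Qed.

(* [1/(a+h) - 1/a + h/a^2 = h^2 / (a^2 (a+h))], and [|a+h| >= |a|/2] for [|h| < |a|/2]. *)
Lemma Cdiff_inv_shift (z w0 : C) : w0 <> z ->
  Cdiff (fun w => (/ (w - z))%C) w0 (- / ((w0 - z) * (w0 - z)))%C.
Proof.
  intros Hne eps Heps.
  set (a := (w0 - z)%C).
  assert (Ha : a <> 0%C) by (intros H; apply Hne, Ceq_minus, H).
  assert (Hma : 0 < Cmod a) by (apply Cmod_gt_0; exact Ha).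
  exists (Rmin (Cmod a / 2) (eps * (Cmod a * Cmod a * Cmod a) / 2)). split.
  { apply Rmin_glb_lt; [lra|]. apply Rdiv_lt_0_compat; [|lra].
    repeat apply Rmult_lt_0_compat; auto. }
  intros y Hy. set (h := (y - w0)%C) in *.
  assert (Hh1 : Cmod h < Cmod a / 2) by (eapply Rlt_le_trans; [apply Hy | apply Rmin_l]).
  assert (Hh2 : Cmod h < eps * (Cmod a * Cmod a * Cmod a) / 2)
    by (eapply Rlt_le_trans; [apply Hy | apply Rmin_r]).
  assert (Hl : Cmod a / 2 <= Cmod (a + h)).
  { pose proof (Cmod_triangle (a + h) (- h)) as T.
    replace (a + h + - h)%C with a in T by ring. rewrite Cmod_opp in T. lra. }
  assert (Hah : (a + h)%C <> 0%C) by (intros H; rewrite H, Cmod_0 in Hl; lra).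
  replace (y - z)%C with (a + h)%C by (unfold a, h; ring).
  replace (/ (a + h) - / a - - / (a * a) * h)%C with (h * h / (a * a * (a + h)))%C
    by (field; split; assumption).
  rewrite Cmod_div by (repeat apply Cmult_neq_0; assumption).
  rewrite !Cmod_mult.
  pose proof (Cmod_ge_0 h).
  apply Rle_trans with (Cmod h * Cmod h / (Cmod a * Cmod a * (Cmod a / 2))).
  { unfold Rdiv. apply Rmult_le_compat_l; [nra|]. apply Rinv_le_contravar.
    - repeat apply Rmult_lt_0_compat; lra.
    - apply Rmult_le_compat_l; [nra | exact Hl]. }
  apply Rle_trans with (Cmod h * (eps * (Cmod a * Cmod a * Cmod a) / 2) / (Cmod a * Cmod a * (Cmod a / 2))).
  { unfold Rdiv. apply Rmult_le_compat_r.
    - left. apply Rinv_0_lt_compat. repeat apply Rmult_lt_0_compat; lra.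
    - apply Rmult_le_compat_l; lra. }
  right. field. lra.
Qed.

Lemma Cdifferentiable_inv (w : C) : w <> 0%C -> Cdifferentiable (fun u => (/ u)%C) w.
Proof.
  intros Hw. eexists. eapply Cdiff_ext; [|apply (Cdiff_inv_shift 0%C w Hw)].
  intros u. cbv beta. f_equal. ring.
Qed.

Lemma ccontinuous_inv (f : R -> C) x : ccontinuous f x -> f x <> 0%C ->
  ccontinuous (fun t => (/ f t)%C) x.
Proof.
  intros Hf H0. apply (continuous_comp f (fun w => (/ w)%C)); [exact Hf|].
  apply Cdifferentiable_continuous, Cdifferentiable_inv, H0.
Qed.

(** * Integrals over the boundary of a family of circles *)

(* The circles [t |-> center c0 + c1 t, radius r0 + r1 t] sweep out the image of the
   rectangle [(t, th) in [t1, t2] x [a, b]]; [boundary_integral] is the integral of [H]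
   along the image of its boundary. *)
Record circle_family := CircleFamily { cf_c0 : C; cf_c1 : C; cf_r0 : R; cf_r1 : R }.

Definition cf_point (p : circle_family) (t th : R) : C :=
  (cf_c0 p + cf_c1 p * RtoC t + RtoC (cf_r0 p + cf_r1 p * t) * cis th)%C.

Definition cf_dt (p : circle_family) (th : R) : C := (cf_c1 p + RtoC (cf_r1 p) * cis th)%C.

Definition cf_dth (p : circle_family) (t th : R) : C :=
  (RtoC (cf_r0 p + cf_r1 p * t) * (Ci * cis th))%C.

Definition integrand_th (p : circle_family) (H : C -> C) (t : R) : R -> C :=
  fun th => (H (cf_point p t th) * cf_dth p t th)%C.

Definition integrand_t (p : circle_family) (H : C -> C) (th : R) : R -> C :=
  fun t => (H (cf_point p t th) * cf_dt p th)%C.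

Definition boundary_integral (p : circle_family) (H : C -> C) (t1 t2 a b : R) : C :=
  (CInt (integrand_th p H t2) a b - CInt (integrand_th p H t1) a b
   - CInt (integrand_t p H b) t1 t2 + CInt (integrand_t p H a) t1 t2)%C.

Definition continuous_on_patch (p : circle_family) (H : C -> C) (t1 t2 a b : R) : Prop :=
  forall t th, t1 <= t <= t2 -> a <= th <= b -> Ccontinuous H (cf_point p t th).

Lemma continuous_on_patch_sub p H t1 t2 a b t1' t2' a' b' :
  continuous_on_patch p H t1 t2 a b -> t1 <= t1' -> t2' <= t2 -> a <= a' -> b' <= b ->
  continuous_on_patch p H t1' t2' a' b'.
Proof. intros G h1 h2 h3 h4 t th Ht Hth. apply G; lra. Qed.

Lemma ccontinuous_cf_point_th p t th : ccontinuous (fun x => cf_point p t x) th.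
Proof.
  apply ccontinuous_plus; [apply ccontinuous_const|].
  apply ccontinuous_scal, ccontinuous_cis.
Qed.

Lemma ccontinuous_cf_point_t p th t : ccontinuous (fun x => cf_point p x th) t.
Proof.
  apply ccontinuous_plus; [apply ccontinuous_plus|].
  - apply ccontinuous_const.
  - apply ccontinuous_scal, ccontinuous_RtoC, continuous_id.
  - apply (ccontinuous_mult (fun x => RtoC (cf_r0 p + cf_r1 p * x))); [|apply ccontinuous_const].
    apply ccontinuous_RtoC.
    apply (@continuous_plus R_UniformSpace R_AbsRing R_NormedModule (fun _ => cf_r0 p)).
    + apply continuous_const.
    + apply (@continuous_scal_r R_UniformSpace R_AbsRing R_NormedModule _ (fun x => x)), continuous_id.
Qed.

Lemma ccontinuous_integrand_th p (H : C -> C) t th : Ccontinuous H (cf_point p t th) ->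
  ccontinuous (integrand_th p H t) th.
Proof.
  intros Hc. apply ccontinuous_mult.
  - apply (continuous_comp (fun x => cf_point p t x) H); [apply ccontinuous_cf_point_th | exact Hc].
  - apply ccontinuous_scal, ccontinuous_scal, ccontinuous_cis.
Qed.

Lemma ccontinuous_integrand_t p (H : C -> C) th t : Ccontinuous H (cf_point p t th) ->
  ccontinuous (integrand_t p H th) t.
Proof.
  intros Hc. apply ccontinuous_mult; [|apply ccontinuous_const].
  apply (continuous_comp (fun x => cf_point p x th) H); [apply ccontinuous_cf_point_t | exact Hc].
Qed.

Lemma boundary_integral_split_t p H t1 tm t2 a b : t1 <= tm <= t2 -> a <= b ->
  continuous_on_patch p H t1 t2 a b ->
  boundary_integral p H t1 t2 a b = (boundary_integral p H t1 tm a b + boundary_integral p H tm t2 a b)%C.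
Proof.
  intros Htm Hab G. unfold boundary_integral.
  rewrite <- (CInt_Chasles (integrand_t p H b) t1 tm t2),
          <- (CInt_Chasles (integrand_t p H a) t1 tm t2)
    by (lra || (intros x Hx; apply ccontinuous_integrand_t, G; lra)).
  ring.
Qed.

Lemma boundary_integral_split_th p H t1 t2 a m b : t1 <= t2 -> a <= m <= b ->
  continuous_on_patch p H t1 t2 a b ->
  boundary_integral p H t1 t2 a b = (boundary_integral p H t1 t2 a m + boundary_integral p H t1 t2 m b)%C.
Proof.
  intros Ht Hm G. unfold boundary_integral.
  rewrite <- (CInt_Chasles (integrand_th p H t2) a m b),
          <- (CInt_Chasles (integrand_th p H t1) a m b)
    by (lra || (intros x Hx; apply ccontinuous_integrand_th, G; lra)).
  ring.
Qed.

Lemma boundary_integral_minus p H K t1 t2 a b : t1 <= t2 -> a <= b ->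
  continuous_on_patch p H t1 t2 a b -> continuous_on_patch p K t1 t2 a b ->
  boundary_integral p (fun w => (H w - K w)%C) t1 t2 a b
  = (boundary_integral p H t1 t2 a b - boundary_integral p K t1 t2 a b)%C.
Proof.
  intros Ht Hab GH GK. unfold boundary_integral.
  assert (A1 : forall t, t1 <= t <= t2 -> CInt (integrand_th p (fun w => (H w - K w)%C) t) a b
                 = (CInt (integrand_th p H t) a b - CInt (integrand_th p K t) a b)%C).
  { intros t Htt. rewrite <- CInt_minus by (auto; intros x Hx; apply ccontinuous_integrand_th;
      first [apply GH | apply GK]; lra).
    apply CInt_ext; [exact Hab|]. intros; unfold integrand_th; ring. }
  assert (A2 : forall th, a <= th <= b -> CInt (integrand_t p (fun w => (H w - K w)%C) th) t1 t2
                 = (CInt (integrand_t p H th) t1 t2 - CInt (integrand_t p K th) t1 t2)%C).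
  { intros th Htt. rewrite <- CInt_minus by (auto; intros x Hx; apply ccontinuous_integrand_t;
      first [apply GH | apply GK]; lra).
    apply CInt_ext; [exact Ht|]. intros; unfold integrand_t; ring. }
  rewrite !A1, !A2 by lra. ring.
Qed.

Lemma is_cderive_cf_point_th p t x : is_cderive (fun th => cf_point p t th) x (cf_dth p t x).
Proof.
  eapply is_cderive_eq.
  - apply is_cderive_plus; [apply is_cderive_const|].
    apply is_cderive_mult; [apply is_cderive_const | apply is_cderive_cis].
  - unfold cf_dth. ring.
Qed.

Lemma is_cderive_cf_point_t p th x : is_cderive (fun t => cf_point p t th) x (cf_dt p th).
Proof.
  assert (Hr : is_derive (fun t => cf_r0 p + cf_r1 p * t) x (cf_r1 p)).
  { auto_derive; [exact I | ring]. }
  eapply is_cderive_eq.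
  - apply is_cderive_plus; [apply is_cderive_plus; [apply is_cderive_const|] |].
    + apply is_cderive_mult; [apply is_cderive_const | apply is_cderive_RtoC, (@is_derive_id R_AbsRing)].
    + apply is_cderive_mult; [apply is_cderive_RtoC, Hr | apply is_cderive_const].
  - unfold cf_dt. change (@one R_AbsRing) with 1. ring.
Qed.

(* An affine map [al + be w] has the primitive [al w + be w^2 / 2], so its boundary integral
   telescopes to zero. *)
Lemma boundary_integral_affine p (al be : C) t1 t2 a b : t1 <= t2 -> a <= b ->
  boundary_integral p (fun w => (al + be * w)%C) t1 t2 a b = 0%C.
Proof.
  intros Ht Hab.
  set (P := fun w => (al * w + (be / 2) * (w * w))%C).
  assert (HP : forall g x d, is_cderive g x d ->
            is_cderive (fun t => P (g t)) x ((al + be * g x) * d)%C).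
  { intros g x d Hg. unfold P. eapply is_cderive_eq.
    - apply is_cderive_plus.
      + apply is_cderive_mult; [apply is_cderive_const | exact Hg].
      + apply is_cderive_mult; [apply is_cderive_const | apply is_cderive_mult; exact Hg].
    - cbv beta. field. }
  assert (K : forall w, Ccontinuous (fun w => (al + be * w)%C) w)
    by (intros w; apply Cdifferentiable_continuous, Cdifferentiable_affine).
  assert (Dth : forall t, CInt (integrand_th p (fun w => (al + be * w)%C) t) a b
                         = (P (cf_point p t b) - P (cf_point p t a))%C).
  { intros t. apply (CInt_derive (fun th => P (cf_point p t th))); [exact Hab | |].
    - intros x _. apply ccontinuous_integrand_th, K.
    - intros x _. apply (HP (fun th => cf_point p t th)), is_cderive_cf_point_th. }
  assert (Dt : forall th, CInt (integrand_t p (fun w => (al + be * w)%C) th) t1 t2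
                         = (P (cf_point p t2 th) - P (cf_point p t1 th))%C).
  { intros th. apply (CInt_derive (fun t => P (cf_point p t th))); [exact Ht | |].
    - intros x _. apply ccontinuous_integrand_t, K.
    - intros x _. apply (HP (fun t => cf_point p t th)), is_cderive_cf_point_t. }
  unfold boundary_integral. rewrite !Dth, !Dt. ring.
Qed.

(** * Goursat's lemma *)

Lemma Cmod_sub_le (x y : C) : Cmod (x - y) <= Cmod x + Cmod y.
Proof. eapply Rle_trans; [apply Cmod_triangle|]. rewrite Cmod_opp. lra. Qed.

Lemma boundary_integral_norm p H t1 t2 a b M K : t1 <= t2 -> a <= b ->
  continuous_on_patch p H t1 t2 a b ->
  (forall t th, t1 <= t <= t2 -> a <= th <= b -> Cmod (H (cf_point p t th)) <= M) ->
  (forall th, Cmod (cf_dt p th) <= K) ->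
  (forall t th, t1 <= t <= t2 -> Cmod (cf_dth p t th) <= K) ->
  Cmod (boundary_integral p H t1 t2 a b) <= 2 * (M * K) * (b - a) + 2 * (M * K) * (t2 - t1).
Proof.
  intros Ht Hab G HM HK1 HK2.
  assert (B1 : forall t, t1 <= t <= t2 -> Cmod (CInt (integrand_th p H t) a b) <= (M * K) * (b - a)).
  { intros t Htt. apply CInt_norm; [exact Hab | intros x Hx; apply ccontinuous_integrand_th, G; lra|].
    intros x Hx. unfold integrand_th. rewrite Cmod_mult.
    apply Rmult_le_compat; try apply Cmod_ge_0; auto. }
  assert (B2 : forall th, a <= th <= b -> Cmod (CInt (integrand_t p H th) t1 t2) <= (M * K) * (t2 - t1)).
  { intros th Htt. apply CInt_norm; [exact Ht | intros x Hx; apply ccontinuous_integrand_t, G; lra|].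
    intros x Hx. unfold integrand_t. rewrite Cmod_mult.
    apply Rmult_le_compat; try apply Cmod_ge_0; auto. }
  unfold boundary_integral.
  pose proof (B1 t1 ltac:(lra)). pose proof (B1 t2 ltac:(lra)).
  pose proof (B2 a ltac:(lra)). pose proof (B2 b ltac:(lra)).
  pose proof (Cmod_triangle (CInt (integrand_th p H t2) a b - CInt (integrand_th p H t1) a b
                             - CInt (integrand_t p H b) t1 t2) (CInt (integrand_t p H a) t1 t2)).
  pose proof (Cmod_sub_le (CInt (integrand_th p H t2) a b - CInt (integrand_th p H t1) a b)
                          (CInt (integrand_t p H b) t1 t2)).
  pose proof (Cmod_sub_le (CInt (integrand_th p H t2) a b) (CInt (integrand_th p H t1) a b)).
  lra.
Qed.

(* A common bound for the radii, the velocities [cf_dt], [cf_dth] and the Lipschitz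
   constant of [cf_point] on [T1 <= t <= T2]. *)
Definition cf_radius_bound p T1 T2 := Rabs (cf_r0 p) + Rabs (cf_r1 p) * (Rabs T1 + Rabs T2).

Definition cf_lipschitz p T1 T2 := Cmod (cf_c1 p) + Rabs (cf_r1 p) + 2 * cf_radius_bound p T1 T2 + 1.

Lemma cf_radius_bound_nonneg p T1 T2 : 0 <= cf_radius_bound p T1 T2.
Proof.
  unfold cf_radius_bound. pose proof (Rabs_pos (cf_r0 p)). pose proof (Rabs_pos (cf_r1 p)).
  pose proof (Rabs_pos T1). pose proof (Rabs_pos T2). nra.
Qed.

Lemma cf_lipschitz_ge1 p T1 T2 : 1 <= cf_lipschitz p T1 T2.
Proof.
  unfold cf_lipschitz. pose proof (Cmod_ge_0 (cf_c1 p)). pose proof (Rabs_pos (cf_r1 p)).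
  pose proof (cf_radius_bound_nonneg p T1 T2). lra.
Qed.

Lemma cf_radius_le p T1 T2 t : T1 <= t <= T2 -> Rabs (cf_r0 p + cf_r1 p * t) <= cf_radius_bound p T1 T2.
Proof.
  intros Ht. unfold cf_radius_bound. eapply Rle_trans; [apply Rabs_triang|]. rewrite Rabs_mult.
  apply Rplus_le_compat_l, Rmult_le_compat_l; [apply Rabs_pos|].
  unfold Rabs; destruct (Rcase_abs t), (Rcase_abs T1), (Rcase_abs T2); lra.
Qed.

Lemma Cmod_cf_dt_le p T1 T2 th : Cmod (cf_dt p th) <= cf_lipschitz p T1 T2.
Proof.
  unfold cf_dt, cf_lipschitz. eapply Rle_trans; [apply Cmod_triangle|].
  rewrite Cmod_mult, Cmod_cis, Cmod_R. pose proof (cf_radius_bound_nonneg p T1 T2). lra.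
Qed.

Lemma Cmod_cf_dth_le p T1 T2 t th : T1 <= t <= T2 -> Cmod (cf_dth p t th) <= cf_lipschitz p T1 T2.
Proof.
  intros Ht. unfold cf_dth, cf_lipschitz. rewrite !Cmod_mult, Cmod_cis, Cmod_Ci, Cmod_R.
  pose proof (cf_radius_le p T1 T2 t Ht). pose proof (cf_radius_bound_nonneg p T1 T2).
  pose proof (Cmod_ge_0 (cf_c1 p)). pose proof (Rabs_pos (cf_r1 p)). lra.
Qed.

Lemma cf_point_lipschitz p T1 T2 t th t' th' : T1 <= t <= T2 ->
  Cmod (cf_point p t th - cf_point p t' th') <= cf_lipschitz p T1 T2 * (Rabs (t - t') + Rabs (th - th')).
Proof.
  intros Ht.
  replace (cf_point p t th - cf_point p t' th')%C with
    (cf_c1 p * RtoC (t - t') + RtoC (cf_r0 p + cf_r1 p * t) * (cis th - cis th')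
     + RtoC (cf_r1 p * (t - t')) * cis th')%C
    by (unfold cf_point; rewrite !RtoC_plus, !RtoC_mult, RtoC_minus; ring).
  eapply Rle_trans; [apply Cmod_triangle|].
  eapply Rle_trans; [apply Rplus_le_compat_r, Cmod_triangle|].
  rewrite !Cmod_mult, !Cmod_R, Cmod_cis, Rabs_mult.
  pose proof (cis_lipschitz th th'). pose proof (cf_radius_le p T1 T2 t Ht).
  pose proof (Rabs_pos (t - t')). pose proof (Rabs_pos (th - th')).
  pose proof (Rabs_pos (cf_r0 p + cf_r1 p * t)). pose proof (Cmod_ge_0 (cis th - cis th')).
  pose proof (Cmod_ge_0 (cf_c1 p)). pose proof (Rabs_pos (cf_r1 p)).
  assert (Rabs (cf_r0 p + cf_r1 p * t) * Cmod (cis th - cis th')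
          <= cf_radius_bound p T1 T2 * (2 * Rabs (th - th'))) by (apply Rmult_le_compat; auto).
  unfold cf_lipschitz. nra.
Qed.

Record rect := Rect { r_t1 : R; r_t2 : R; r_a : R; r_b : R }.

Section Quadrisection.

Variable p : circle_family.
Variable H : C -> C.

Let BI (r : rect) := boundary_integral p H (r_t1 r) (r_t2 r) (r_a r) (r_b r).
Let valid (r : rect) := r_t1 r <= r_t2 r /\ r_a r <= r_b r
  /\ continuous_on_patch p H (r_t1 r) (r_t2 r) (r_a r) (r_b r).

Definition quarter (i : nat) (r : rect) : rect :=
  let tm := (r_t1 r + r_t2 r) / 2 in let m := (r_a r + r_b r) / 2 in
  match i with
  | O => Rect (r_t1 r) tm (r_a r) m
  | 1 => Rect (r_t1 r) tm m (r_b r)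
  | 2 => Rect tm (r_t2 r) (r_a r) m
  | _ => Rect tm (r_t2 r) m (r_b r)
  end.

Lemma boundary_integral_quarters r : valid r ->
  BI r = (BI (quarter 0 r) + BI (quarter 1 r) + BI (quarter 2 r) + BI (quarter 3 r))%C.
Proof.
  destruct r as [t1 t2 a b]. intros (Ht & Hab & G). unfold BI, quarter; simpl in *.
  rewrite (boundary_integral_split_t p H t1 ((t1 + t2) / 2) t2 a b) by (auto; lra).
  rewrite (boundary_integral_split_th p H t1 ((t1 + t2) / 2) a ((a + b) / 2) b)
    by (try lra; eapply continuous_on_patch_sub; eauto; lra).
  rewrite (boundary_integral_split_th p H ((t1 + t2) / 2) t2 a ((a + b) / 2) b)
    by (try lra; eapply continuous_on_patch_sub; eauto; lra).
  ring.
Qed.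

Definition heavy_quarter (r : rect) : rect :=
  if Rle_dec (Cmod (BI r) / 4) (Cmod (BI (quarter 0 r))) then quarter 0 r
  else if Rle_dec (Cmod (BI r) / 4) (Cmod (BI (quarter 1 r))) then quarter 1 r
  else if Rle_dec (Cmod (BI r) / 4) (Cmod (BI (quarter 2 r))) then quarter 2 r
  else quarter 3 r.

Lemma heavy_quarter_spec r : valid r ->
  let r' := heavy_quarter r in
  r_t1 r <= r_t1 r' /\ r_t2 r' <= r_t2 r /\ r_a r <= r_a r' /\ r_b r' <= r_b r /\
  r_t2 r' - r_t1 r' = (r_t2 r - r_t1 r) / 2 /\ r_b r' - r_a r' = (r_b r - r_a r) / 2 /\
  Cmod (BI r) / 4 <= Cmod (BI r').
Proof.
  intros Hr. pose proof Hr as (Ht & Hab & _). unfold heavy_quarter.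
  destruct (Rle_dec _ (Cmod (BI (quarter 0 r)))); [simpl; repeat split; auto; lra|].
  destruct (Rle_dec _ (Cmod (BI (quarter 1 r)))); [simpl; repeat split; auto; lra|].
  destruct (Rle_dec _ (Cmod (BI (quarter 2 r)))); [simpl; repeat split; auto; lra|].
  repeat split; try (simpl; lra).
  pose proof (boundary_integral_quarters r Hr) as E4.
  pose proof (Cmod_triangle (BI (quarter 0 r) + BI (quarter 1 r) + BI (quarter 2 r)) (BI (quarter 3 r))).
  pose proof (Cmod_triangle (BI (quarter 0 r) + BI (quarter 1 r)) (BI (quarter 2 r))).
  pose proof (Cmod_triangle (BI (quarter 0 r)) (BI (quarter 1 r))).
  rewrite <- E4 in *. lra.
Qed.

Fixpoint heavy_nest (r0 : rect) (n : nat) : rect :=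
  match n with O => r0 | S n => heavy_quarter (heavy_nest r0 n) end.

Lemma heavy_nest_spec r0 n : valid r0 ->
  let r := heavy_nest r0 n in
  (r_t1 r0 <= r_t1 r /\ r_t1 r <= r_t2 r /\ r_t2 r <= r_t2 r0) /\
  (r_a r0 <= r_a r /\ r_a r <= r_b r /\ r_b r <= r_b r0) /\
  r_t2 r - r_t1 r = (r_t2 r0 - r_t1 r0) / 2 ^ n /\ r_b r - r_a r = (r_b r0 - r_a r0) / 2 ^ n /\
  Cmod (BI r0) / 4 ^ n <= Cmod (BI r).
Proof.
  intros H0. pose proof H0 as (Ht0 & Ha0 & G0).
  induction n as [|n IH]; simpl.
  - repeat split; lra.
  - set (r := heavy_nest r0 n) in *. destruct IH as ((h1 & h2 & h3) & (h4 & h5 & h6) & h7 & h8 & h9).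
    assert (Hr : valid r) by (repeat split; auto; eapply continuous_on_patch_sub; eauto).
    destruct (heavy_quarter_spec r Hr) as (k1 & k2 & k3 & k4 & k5 & k6 & k7).
    assert (0 < 2 ^ n) by (apply pow_lt; lra). assert (0 < 4 ^ n) by (apply pow_lt; lra).
    repeat split; try lra.
    + rewrite k5, h7. field. lra.
    + rewrite k6, h8. field. lra.
    + replace (Cmod (BI r0) / (4 * 4 ^ n)) with (Cmod (BI r0) / 4 ^ n / 4) by (field; lra). lra.
Qed.

Lemma heavy_nest_mono r0 n k : valid r0 ->
  r_t1 (heavy_nest r0 n) <= r_t1 (heavy_nest r0 (n + k)) /\ r_t2 (heavy_nest r0 (n + k)) <= r_t2 (heavy_nest r0 n) /\
  r_a (heavy_nest r0 n) <= r_a (heavy_nest r0 (n + k)) /\ r_b (heavy_nest r0 (n + k)) <= r_b (heavy_nest r0 n).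
Proof.
  intros H0. induction k as [|k IH].
  - rewrite Nat.add_0_r. lra.
  - rewrite Nat.add_succ_r. simpl.
    destruct (heavy_nest_spec r0 (n + k) H0) as ((h1 & h2 & h3) & (h4 & h5 & h6) & _).
    assert (Hr : valid (heavy_nest r0 (n + k)))
      by (destruct H0 as (_ & _ & G0); repeat split; auto; eapply continuous_on_patch_sub; eauto).
    destruct (heavy_quarter_spec _ Hr) as (k1 & k2 & k3 & k4 & _). lra.
Qed.

Lemma heavy_nest_point r0 : valid r0 -> exists ts ths, forall n,
  r_t1 (heavy_nest r0 n) <= ts <= r_t2 (heavy_nest r0 n) /\
  r_a (heavy_nest r0 n) <= ths <= r_b (heavy_nest r0 n).
Proof.
  intros H0. set (S := heavy_nest r0).
  assert (U : forall k n, r_t1 (S k) <= r_t2 (S n) /\ r_a (S k) <= r_b (S n)).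
  { intros k n.
    destruct (heavy_nest_spec r0 n H0) as ((_ & Hn1 & _) & (_ & Hn2 & _) & _).
    destruct (heavy_nest_spec r0 k H0) as ((_ & Hk1 & _) & (_ & Hk2 & _) & _).
    destruct (Compare_dec.le_lt_dec k n) as [Hkn|Hkn].
    - destruct (heavy_nest_mono r0 k (n - k) H0) as (i1 & _ & i3 & _).
      replace (k + (n - k))%nat with n in * by lia. unfold S. lra.
    - destruct (heavy_nest_mono r0 n (k - n) H0) as (_ & i2 & _ & i4).
      replace (n + (k - n))%nat with k in * by lia. unfold S. lra. }
  destruct (completeness (fun x => exists n, x = r_t1 (S n))) as [ts [Hub Hlub]].
  { exists (r_t2 (S O)). intros x [n ->]. apply U. }
  { exists (r_t1 (S O)), O. reflexivity. }
  destruct (completeness (fun x => exists n, x = r_a (S n))) as [ths [Hub' Hlub']].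
  { exists (r_b (S O)). intros x [n ->]. apply U. }
  { exists (r_a (S O)), O. reflexivity. }
  exists ts, ths. intros n. repeat split.
  - apply Hub. exists n. reflexivity.
  - apply Hlub. intros x [k ->]. apply U.
  - apply Hub'. exists n. reflexivity.
  - apply Hlub'. intros x [k ->]. apply U.
Qed.

End Quadrisection.

Lemma Cmod_le_linear_eq0 (T : C) (K : R) :
  (forall d, 0 < d <= 1 / 2 -> Cmod T <= K * d) -> T = 0%C.
Proof.
  intros H. apply Cmod_eq_0. pose proof (Cmod_ge_0 T).
  destruct (Req_dec (Cmod T) 0) as [|HT]; [assumption|]. exfalso.
  assert (HK : 0 < Rabs K + 1) by (pose proof (Rabs_pos K); lra).
  set (d := Rmin (1 / 2) (Cmod T / (2 * (Rabs K + 1)))).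
  assert (Hd : 0 < d) by (apply Rmin_glb_lt; [lra | apply Rdiv_lt_0_compat; lra]).
  assert (Hd1 : d <= 1 / 2) by apply Rmin_l.
  assert (Hd2 : d * (2 * (Rabs K + 1)) <= Cmod T).
  { apply Rle_trans with (Cmod T / (2 * (Rabs K + 1)) * (2 * (Rabs K + 1))); [|right; field; lra].
    apply Rmult_le_compat_r; [lra | apply Rmin_r]. }
  specialize (H d (conj Hd Hd1)).
  assert (K * d <= Rabs K * d) by (apply Rmult_le_compat_r; [lra | apply Rle_abs]).
  nra.
Qed.

Lemma pow2_unbounded x : exists n, x < 2 ^ n.
Proof.
  destruct (Rle_lt_dec x 0) as [Hx|Hx]; [exists O; simpl; lra|].
  destruct (archimed_cor1 (/ x)) as [N [HN HN0]]; [apply Rinv_0_lt_compat, Hx|].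
  exists N.
  assert (HN2 : INR N <= 2 ^ N).
  { clear. induction N as [|N IH]; [simpl; lra|]. rewrite S_INR. simpl.
    assert (1 <= 2 ^ N) by (apply pow_R1_Rle; lra). lra. }
  assert (0 < INR N) by (apply lt_0_INR; lia).
  apply Rlt_le_trans with (INR N); [|exact HN2].
  apply Rinv_lt_cancel; assumption.
Qed.

(* Near a point [w0 = cf_point p ts ths] of differentiability, [H] differs from its affine
   approximation by [eps |w - w0|]; the affine part has boundary integral zero. *)
Lemma boundary_integral_near_Cdiff (p : circle_family) (H : C -> C) (T1 T2 t1 t2 a b ts ths : R)
  (l : C) (eps del : R) :
  T1 <= t1 -> t2 <= T2 -> t1 <= ts <= t2 -> a <= ths <= b ->
  continuous_on_patch p H t1 t2 a b ->
  (forall y, Cmod (y - cf_point p ts ths) < del ->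
     Cmod (H y - H (cf_point p ts ths) - l * (y - cf_point p ts ths)) <= eps * Cmod (y - cf_point p ts ths)) ->
  0 <= eps -> cf_lipschitz p T1 T2 * ((t2 - t1) + (b - a)) < del ->
  Cmod (boundary_integral p H t1 t2 a b)
    <= 2 * eps * cf_lipschitz p T1 T2 ^ 2 * ((t2 - t1) + (b - a)) ^ 2.
Proof.
  intros HT1 HT2 Hts Hths G Hb Heps Hdel.
  set (w0 := cf_point p ts ths) in *. set (K := cf_lipschitz p T1 T2) in *.
  set (s := (t2 - t1) + (b - a)) in *.
  assert (HK : 1 <= K) by apply cf_lipschitz_ge1.
  set (Lf := fun w => (H w0 - l * w0 + l * w)%C).
  assert (GL : continuous_on_patch p Lf t1 t2 a b)
    by (intros t th _ _; apply Cdifferentiable_continuous, Cdifferentiable_affine).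
  replace (boundary_integral p H t1 t2 a b) with (boundary_integral p (fun w => (H w - Lf w)%C) t1 t2 a b).
  2: { rewrite boundary_integral_minus by (auto; lra).
       unfold Lf. rewrite boundary_integral_affine by lra. ring. }
  replace (2 * eps * K ^ 2 * s ^ 2) with (2 * ((eps * (K * s)) * K) * (b - a) + 2 * ((eps * (K * s)) * K) * (t2 - t1))
    by (unfold s; ring).
  apply boundary_integral_norm; try lra.
  - intros t th Ht Hth. apply (@continuous_minus C_UniformSpace C_AbsRing C_NormedModule); [apply G | apply GL]; lra.
  - intros t th Ht Hth.
    assert (Hw : Cmod (cf_point p t th - w0) <= K * s).
    { eapply Rle_trans; [apply cf_point_lipschitz with (T1 := T1) (T2 := T2); lra|].
      apply Rmult_le_compat_l; [lra|].
      unfold s, Rabs; destruct (Rcase_abs (t - ts)), (Rcase_abs (th - ths)); lra. }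
    unfold Lf.
    replace (H (cf_point p t th) - (H w0 - l * w0 + l * cf_point p t th))%C
      with (H (cf_point p t th) - H w0 - l * (cf_point p t th - w0))%C by ring.
    eapply Rle_trans; [exact (Hb (cf_point p t th) ltac:(lra))|].
    apply Rmult_le_compat_l; assumption.
  - intros th. apply Cmod_cf_dt_le.
  - intros t th Ht. apply Cmod_cf_dth_le. lra.
Qed.

Theorem goursat (p : circle_family) (H : C -> C) (T1 T2 A B : R) : T1 <= T2 -> A <= B ->
  (forall t th, T1 <= t <= T2 -> A <= th <= B -> Cdifferentiable H (cf_point p t th)) ->
  boundary_integral p H T1 T2 A B = 0%C.
Proof.
  intros HT HA HD. set (r0 := Rect T1 T2 A B).
  assert (Hr0 : r_t1 r0 <= r_t2 r0 /\ r_a r0 <= r_b r0 /\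
                continuous_on_patch p H (r_t1 r0) (r_t2 r0) (r_a r0) (r_b r0)).
  { repeat split; auto. intros t th Ht Hth. apply Cdifferentiable_continuous, HD; assumption. }
  destruct (heavy_nest_point p H r0 Hr0) as [ts [ths Hp]].
  destruct (Hp O) as [P1 P2]. destruct (HD ts ths P1 P2) as [l Hl].
  set (K := cf_lipschitz p T1 T2). assert (HK : 1 <= K) by apply cf_lipschitz_ge1.
  set (d0 := (T2 - T1) + (B - A)).
  apply Cmod_le_linear_eq0 with (K := 2 * K ^ 2 * d0 ^ 2). intros eps [Heps _].
  destruct (Hl eps Heps) as [del [Hdel Hb]].
  destruct (pow2_unbounded (K * d0 / del)) as [n Hn].
  assert (H2n : 0 < 2 ^ n) by (apply pow_lt; lra).
  assert (E4 : 4 ^ n = 2 ^ n * 2 ^ n) by (rewrite <- Rpow_mult_distr; f_equal; lra).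
  destruct (heavy_nest_spec p H r0 n Hr0) as ((h1 & h2 & h3) & (h4 & h5 & h6) & h7 & h8 & h9).
  set (r := heavy_nest p H r0 n) in *. destruct (Hp n) as [Q1 Q2].
  assert (Hsz : (r_t2 r - r_t1 r) + (r_b r - r_a r) = d0 / 2 ^ n)
    by (rewrite h7, h8; unfold d0; simpl; field; lra).
  assert (Hsmall : K * (d0 / 2 ^ n) < del).
  { apply Rmult_lt_compat_r with (r := del) in Hn; [|exact Hdel].
    unfold Rdiv in *. rewrite Rmult_assoc, Rinv_l, Rmult_1_r in Hn by lra.
    apply Rmult_lt_reg_r with (2 ^ n); [exact H2n|].
    rewrite !Rmult_assoc, Rinv_l by lra. lra. }
  pose proof (boundary_integral_near_Cdiff p H T1 T2 (r_t1 r) (r_t2 r) (r_a r) (r_b r) ts ths l eps del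
                h1 h3 Q1 Q2 (continuous_on_patch_sub _ _ _ _ _ _ _ _ _ _ (proj2 (proj2 Hr0)) h1 h3 h4 h6)
                Hb ltac:(lra) ltac:(rewrite Hsz; exact Hsmall)) as Hloc.
  fold K in Hloc. rewrite Hsz in Hloc.
  simpl in h9. fold r0 in h9.
  assert (Hq : Cmod (boundary_integral p H T1 T2 A B) / 4 ^ n <= 2 * eps * K ^ 2 * d0 ^ 2 / 4 ^ n).
  { eapply Rle_trans; [exact h9|]. eapply Rle_trans; [exact Hloc|].
    right. rewrite E4. field. lra. }
  apply Rmult_le_reg_r with (/ 4 ^ n); [apply Rinv_0_lt_compat; rewrite E4; nra|].
  unfold Rdiv in Hq. lra.
Qed.

(** * Circle integrals and the Cauchy formula *)

Definition circle_integral (H : C -> C) (c : C) (rho : R) : C :=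
  CInt (fun th => (H (c + RtoC rho * cis th) * (RtoC rho * (Ci * cis th)))%C) 0 (2 * PI).

Lemma twoPI_pos : 0 < 2 * PI.
Proof. pose proof PI_RGT_0. lra. Qed.

Lemma circle_integral_homotopy (H : C -> C) c0 c1 r0 r1 :
  (forall t th, 0 <= t <= 1 -> 0 <= th <= 2 * PI ->
     Cdifferentiable H (cf_point (CircleFamily c0 c1 r0 r1) t th)) ->
  circle_integral H c0 r0 = circle_integral H (c0 + c1) (r0 + r1).
Proof.
  intros HD. set (p := CircleFamily c0 c1 r0 r1). pose proof twoPI_pos.
  pose proof (goursat p H 0 1 0 (2 * PI) ltac:(lra) ltac:(lra) HD) as Z.
  unfold boundary_integral in Z.
  rewrite (CInt_ext (integrand_t p H (2 * PI)) (integrand_t p H 0)) in Z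
    by (try lra; intros x _; unfold integrand_t, cf_point, cf_dt; rewrite cis_2PI, cis_0; reflexivity).
  rewrite (CInt_ext (integrand_th p H 1)
             (fun th => (H (c0 + c1 + RtoC (r0 + r1) * cis th) * (RtoC (r0 + r1) * (Ci * cis th)))%C)) in Z
    by (try lra; intros x _; unfold integrand_th, cf_point, cf_dth; simpl;
        rewrite Rmult_1_r, Cmult_1_r; reflexivity).
  rewrite (CInt_ext (integrand_th p H 0)
             (fun th => (H (c0 + RtoC r0 * cis th) * (RtoC r0 * (Ci * cis th)))%C)) in Z
    by (try lra; intros x _; unfold integrand_th, cf_point, cf_dth; simpl;
        rewrite Rmult_0_r, Rplus_0_r, Cmult_0_r, Cplus_0_r; reflexivity).
  unfold circle_integral. symmetry. apply Ceq_minus. rewrite <- Z. ring.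
Qed.

Lemma ccontinuous_on_circle (G : C -> C) c rho th : Cdifferentiable_on_disc G -> 0 <= rho ->
  Cmod c + rho < 1 -> ccontinuous (fun x => G (c + RtoC rho * cis x)%C) th.
Proof.
  intros HG Hr Hc. apply (continuous_comp (fun x => (c + RtoC rho * cis x)%C) G).
  - apply ccontinuous_plus; [apply ccontinuous_const | apply ccontinuous_scal, ccontinuous_cis].
  - apply Cdifferentiable_continuous, HG.
    eapply Rle_lt_trans; [apply Cmod_triangle|]. rewrite Cmod_scal_cis; lra.
Qed.

Lemma ccontinuous_on_centered_circle (G : C -> C) rho th : Cdifferentiable_on_disc G -> 0 <= rho < 1 ->
  ccontinuous (fun x => G (RtoC rho * cis x)%C) th.
Proof.
  intros HG Hr. eapply continuous_ext; [|apply (ccontinuous_on_circle G 0%C rho th HG); [lra|]].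
  - intros y. simpl. f_equal. ring.
  - rewrite Cmod_0. lra.
Qed.

(* [fourier_integral G x rho] is [2 pi] times the [(-x)]-th Fourier coefficient of [G] on the
   circle of radius [rho]. *)
Definition fourier_integral (G : C -> C) (x rho : R) : C :=
  CInt (fun th => (G (RtoC rho * cis th) * cis (x * th))%C) 0 (2 * PI).

Lemma ccontinuous_fourier_integrand G rho x th : Cdifferentiable_on_disc G -> 0 <= rho < 1 ->
  ccontinuous (fun th => (G (RtoC rho * cis th) * cis (x * th))%C) th.
Proof.
  intros HG Hr. apply ccontinuous_mult; [apply ccontinuous_on_centered_circle; auto|].
  apply ccontinuous_cis_scal.
Qed.

Lemma fourier_integral_pos (G : C -> C) (m : nat) (rho : R) : Cdifferentiable_on_disc G -> (1 <= m)%nat ->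
  0 < rho < 1 -> fourier_integral G (INR m) rho = 0%C.
Proof.
  intros HG Hm Hr. pose proof twoPI_pos as HPI.
  destruct m as [|k]; [lia|].
  set (H := fun w => (G w * w ^ k)%C).
  assert (C1 : circle_integral H 0%C 0 = circle_integral H 0%C rho).
  { transitivity (circle_integral H (0 + 0)%C (0 + rho)); [|f_equal; [apply Cplus_0_l | apply Rplus_0_l]].
    apply circle_integral_homotopy. intros t th Ht Hth.
    apply Cdifferentiable_mult; [|apply Cdifferentiable_pow; exists 1%C; apply Cdiff_id].
    apply HG. unfold cf_point; simpl.
    rewrite Cmult_0_l, !Cplus_0_l, Rplus_0_l, Cmod_scal_cis by nra. nra. }
  assert (Z0 : circle_integral H 0%C 0 = 0%C).
  { unfold circle_integral. rewrite (CInt_ext _ (fun _ => 0%C)) by (try lra; intros; ring).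
    rewrite CInt_const. ring. }
  assert (Z1 : circle_integral H 0%C rho = (Ci * RtoC (rho ^ S k) * fourier_integral G (INR (S k)) rho)%C).
  { unfold circle_integral, fourier_integral.
    rewrite <- CInt_scal by (try lra; intros th _; apply ccontinuous_fourier_integrand; auto; lra).
    apply CInt_ext; [lra|]. intros th _. unfold H.
    rewrite Cplus_0_l, Cpow_mult_l, cis_pow, <- RtoC_pow.
    replace (INR (S k) * th) with (INR k * th + th) by (rewrite S_INR; ring).
    replace (rho ^ S k) with (rho ^ k * rho) by (simpl; ring).
    rewrite <- cis_add, RtoC_mult. ring. }
  rewrite <- C1, Z0 in Z1.
  apply (f_equal (fun u => (/ (Ci * RtoC (rho ^ S k)) * u)%C)) in Z1.
  rewrite Cmult_0_r in Z1. rewrite Z1. field.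
  split; intros K; injection K; [apply (pow_nonzero rho (S k)); lra | lra].
Qed.

Lemma circle_integral_inv_pow (G : C -> C) (k : nat) (rho : R) : Cdifferentiable_on_disc G -> 0 < rho < 1 ->
  circle_integral (fun w => (G w * (/ w) ^ S k)%C) 0%C rho
  = (Ci * RtoC ((/ rho) ^ k) * fourier_integral G (- INR k) rho)%C.
Proof.
  intros HG Hr. pose proof twoPI_pos. unfold circle_integral, fourier_integral.
  rewrite <- CInt_scal by (try lra; intros th _; apply ccontinuous_fourier_integrand; auto; lra).
  apply CInt_ext; [lra|]. intros th _.
  assert (Hinv : (/ (RtoC rho * cis th))%C = (RtoC (/ rho) * cis (- th))%C).
  { rewrite <- cis_inv, RtoC_inv by lra. field. split; [apply cis_neq0 | intros K; injection K; lra]. }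
  rewrite Cplus_0_l, Hinv, Cpow_mult_l, cis_pow, <- RtoC_pow.
  replace (INR (S k) * - th) with (- INR k * th + - th) by (rewrite S_INR; ring).
  rewrite <- cis_add. simpl pow. rewrite !RtoC_mult.
  rewrite <- cis_inv, RtoC_inv by lra.
  field. split; [apply cis_neq0 | intros K; injection K; lra].
Qed.

Lemma fourier_integral_neg_rescale (G : C -> C) (k : nat) (r1 r2 : R) : Cdifferentiable_on_disc G ->
  0 < r1 < 1 -> 0 < r2 < 1 ->
  (fourier_integral G (- INR k) r1 * RtoC (r2 ^ k))%C = (fourier_integral G (- INR k) r2 * RtoC (r1 ^ k))%C.
Proof.
  intros HG H1 H2.
  assert (Heq : circle_integral (fun w => (G w * (/ w) ^ S k)%C) 0%C r1
                = circle_integral (fun w => (G w * (/ w) ^ S k)%C) 0%C r2).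
  { transitivity (circle_integral (fun w => (G w * (/ w) ^ S k)%C) (0 + 0)%C (r1 + (r2 - r1)));
      [|f_equal; [apply Cplus_0_l | ring]].
    apply circle_integral_homotopy. intros t th Ht Hth.
    assert (Hrad : 0 < r1 + (r2 - r1) * t < 1).
    { assert (0 <= r1 * (1 - t)) by (apply Rmult_le_pos; lra).
      assert (0 <= r2 * t) by (apply Rmult_le_pos; lra).
      destruct (Req_dec t 1) as [->|Ht1]; [lra|].
      assert (0 < r1 * (1 - t)) by (apply Rmult_lt_0_compat; lra).
      assert (r1 * (1 - t) + r2 * t < 1 * (1 - t) + 1 * t) by nra. lra. }
    replace (cf_point _ t th) with (RtoC (r1 + (r2 - r1) * t) * cis th)%C
      by (unfold cf_point; simpl; ring).
    apply Cdifferentiable_mult; [apply HG; rewrite Cmod_scal_cis; lra|].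
    apply (Cdifferentiable_pow (fun w => (/ w)%C)), Cdifferentiable_inv.
    apply Cmult_neq_0; [intros K; injection K; lra | apply cis_neq0]. }
  rewrite !circle_integral_inv_pow in Heq by assumption.
  assert (Ci_neq0 : Ci <> 0%C) by (intros K; injection K; lra).
  assert (P : forall rho, 0 < rho -> (RtoC ((/ rho) ^ k) * RtoC (rho ^ k))%C = 1%C).
  { intros rho Hr. rewrite <- RtoC_mult, <- Rpow_mult_distr, Rinv_l by lra. rewrite pow1. reflexivity. }
  rewrite <- (Cmult_1_r (fourier_integral G _ r1 * _)), <- (P r1), <- (Cmult_1_r (fourier_integral G _ r2 * _)),
          <- (P r2) by lra.
  apply (f_equal (fun u => (u * RtoC (r1 ^ k) * RtoC (r2 ^ k) / Ci)%C)) in Heq.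
  transitivity (Ci * RtoC ((/ r1) ^ k) * fourier_integral G (- INR k) r1 * RtoC (r1 ^ k) * RtoC (r2 ^ k) / Ci)%C;
    [field; exact Ci_neq0|].
  rewrite Heq. field. exact Ci_neq0.
Qed.

Definition cauchy_kernel (G : C -> C) (z : C) : C -> C := fun w => (G w * / (w - z))%C.

Lemma cauchy_homotopy_point z rho s t th : Cmod z < rho < 1 -> 0 < s -> Cmod z + s < 1 -> 0 <= t <= 1 ->
  Cmod (cf_point (CircleFamily z (- z) s (rho - s)) t th) < 1 /\
  cf_point (CircleFamily z (- z) s (rho - s)) t th <> z.
Proof.
  intros Hr Hs Hzs Ht. set (w := cf_point _ t th). pose proof (Cmod_ge_0 z).
  set (r := s + (rho - s) * t).
  assert (Hrt : 0 <= r).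
  { assert (0 <= s * (1 - t)) by (apply Rmult_le_pos; lra).
    assert (0 <= rho * t) by (apply Rmult_le_pos; lra). unfold r. nra. }
  split.
  - replace w with (z * RtoC (1 - t) + RtoC r * cis th)%C
      by (unfold w, r, cf_point; simpl; rewrite RtoC_minus; ring).
    eapply Rle_lt_trans; [apply Cmod_triangle|].
    rewrite Cmod_mult, Cmod_scal_cis, Cmod_R, Rabs_right by lra.
    destruct (Req_dec t 1) as [->|Ht1]; [unfold r; nra|].
    assert ((Cmod z + s) * (1 - t) < 1 * (1 - t)) by (apply Rmult_lt_compat_r; lra).
    assert (rho * t <= 1 * t) by (apply Rmult_le_compat_r; lra).
    unfold r. nra.
  - intros K. assert (K2 : (- z * RtoC t + RtoC r * cis th)%C = 0%C).
    { rewrite <- (proj1 (Ceq_minus w z) K). unfold w, r, cf_point; simpl. ring. }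
    pose proof (Cmod_triangle (- z * RtoC t + RtoC r * cis th) (z * RtoC t)) as T.
    replace (- z * RtoC t + RtoC r * cis th + z * RtoC t)%C with (RtoC r * cis th)%C in T by ring.
    rewrite K2, Cmod_0, Cmod_scal_cis, Cmod_mult, Cmod_R, Rabs_right in T by lra.
    destruct (Req_dec t 1) as [->|Ht1]; [unfold r in T; lra|].
    assert (0 < s * (1 - t)) by (apply Rmult_lt_0_compat; lra).
    assert (Cmod z * t <= rho * t) by (apply Rmult_le_compat_r; lra).
    unfold r in T. nra.
Qed.

Lemma circle_integral_cauchy_kernel (G : C -> C) (z : C) (rho s : R) : Cdifferentiable_on_disc G ->
  Cmod z < rho < 1 -> 0 < s -> Cmod z + s < 1 ->
  circle_integral (cauchy_kernel G z) 0%C rho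
  = (Ci * CInt (fun th => G (z + RtoC s * cis th)%C) 0 (2 * PI))%C.
Proof.
  intros HG Hr Hs Hzs. pose proof twoPI_pos.
  transitivity (circle_integral (cauchy_kernel G z) z s).
  - symmetry. transitivity (circle_integral (cauchy_kernel G z) (z + - z)%C (s + (rho - s))).
    + apply circle_integral_homotopy. intros t th Ht _.
      destruct (cauchy_homotopy_point z rho s t th Hr Hs Hzs Ht) as [Hw Hwz].
      apply Cdifferentiable_mult; [apply HG, Hw|].
      eexists. apply Cdiff_inv_shift, Hwz.
    + f_equal; ring.
  - unfold circle_integral, cauchy_kernel.
    rewrite <- CInt_scal by (try lra; intros th _; apply ccontinuous_on_circle; auto; lra).
    apply CInt_ext; [lra|]. intros th _.
    replace (z + RtoC s * cis th - z)%C with (RtoC s * cis th)%C by ring.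
    field. split; [apply cis_neq0 | intros K; injection K; lra].
Qed.

Theorem cauchy_formula (G : C -> C) (z : C) (rho : R) : Cdifferentiable_on_disc G -> Cmod z < rho < 1 ->
  circle_integral (cauchy_kernel G z) 0%C rho = (RtoC (2 * PI) * Ci * G z)%C.
Proof.
  intros HG Hr. pose proof twoPI_pos. pose proof (Cmod_ge_0 z).
  apply Ceq_minus, Cmod_le_linear_eq0 with (K := 2 * PI). intros eps [Heps _].
  destruct (HG z ltac:(lra)) as [l Hl].
  destruct (Cdiff_small_change G z l Hl eps Heps) as [del [Hdel Hb]].
  set (s := Rmin (del / 2) ((1 - Cmod z) / 2)).
  assert (Hs : 0 < s) by (apply Rmin_glb_lt; lra).
  assert (Hs1 : s < del) by (eapply Rle_lt_trans; [apply Rmin_l | lra]).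
  assert (Hs2 : Cmod z + s < 1) by (assert (s <= (1 - Cmod z) / 2) by apply Rmin_r; lra).
  rewrite (circle_integral_cauchy_kernel G z rho s HG Hr Hs Hs2).
  replace (RtoC (2 * PI) * Ci * G z)%C with (Ci * CInt (fun _ => G z) 0 (2 * PI))%C
    by (rewrite CInt_const, Rminus_0_r; ring).
  replace (Ci * CInt (fun th => G (z + RtoC s * cis th)%C) 0 (2 * PI) - Ci * CInt (fun _ => G z) 0 (2 * PI))%C
    with (Ci * CInt (fun th => G (z + RtoC s * cis th) - G z)%C 0 (2 * PI))%C.
  2: { rewrite CInt_minus; try lra; [ring| |].
       - intros x _. apply ccontinuous_on_circle; auto; lra.
       - intros x _. apply ccontinuous_const. }
  rewrite Cmod_mult, Cmod_Ci, Rmult_1_l.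
  replace (2 * PI * eps) with (eps * (2 * PI - 0)) by ring.
  apply CInt_norm; [lra | |].
  - intros x _. apply ccontinuous_minus; [apply ccontinuous_on_circle; auto; lra | apply ccontinuous_const].
  - intros x _. apply Hb. replace (z + RtoC s * cis x - z)%C with (RtoC s * cis x)%C by ring.
    rewrite Cmod_scal_cis; lra.
Qed.

(** * Power series expansion *)

Fixpoint Csum (f : nat -> C) (N : nat) : C :=
  match N with O => 0%C | S N => (Csum f N + f N)%C end.

Lemma Csum_ext f g N : (forall k, f k = g k) -> Csum f N = Csum g N.
Proof. intros H. induction N as [|N IH]; simpl; [reflexivity|]. rewrite IH, H. reflexivity. Qed.

Lemma Csum_mult_l c f N : (c * Csum f N)%C = Csum (fun k => c * f k)%C N.
Proof. induction N as [|N IH]; simpl; [ring|]. rewrite <- IH. ring. Qed.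

Lemma Csum_geometric (q : C) N : ((1 - q) * Csum (fun k => q ^ k) N)%C = (1 - q ^ N)%C.
Proof. induction N as [|N IH]; simpl; [ring|]. rewrite Cmult_plus_distr_l, IH. ring. Qed.

Lemma ccontinuous_on_Csum (f : nat -> R -> C) a b N : (forall k, ccontinuous_on (f k) a b) ->
  ccontinuous_on (fun t => Csum (fun k => f k t) N) a b.
Proof.
  intros Hf x Hx. induction N as [|N IH]; simpl; [apply ccontinuous_const|].
  apply ccontinuous_plus; [exact IH | apply Hf, Hx].
Qed.

Lemma CInt_Csum (f : nat -> R -> C) a b N : a <= b -> (forall k, ccontinuous_on (f k) a b) ->
  CInt (fun t => Csum (fun k => f k t) N) a b = Csum (fun k => CInt (f k) a b) N.
Proof.
  intros Hab Hf. induction N as [|N IH]; simpl.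
  - rewrite CInt_const. ring.
  - rewrite CInt_plus, IH; [reflexivity | exact Hab | exact (ccontinuous_on_Csum f a b N Hf) | apply Hf].
Qed.

Lemma Cmod_one_minus_ge (q : C) : 1 - Cmod q <= Cmod (1 - q)%C.
Proof.
  pose proof (Cmod_triangle (1 - q)%C q) as T.
  assert (E : (1 - q + q)%C = 1%C) by ring. rewrite E in T.
  rewrite Cmod_1 in T. lra.
Qed.

Lemma ccontinuous_on_segment_bounded (f : R -> C) a b : a <= b -> ccontinuous_on f a b ->
  exists M, forall x, a <= x <= b -> Cmod (f x) <= M.
Proof.
  intros Hab Hf.
  destruct (continuity_ab_maj (fun x => Rabs (Re (f x)) + Rabs (Im (f x))) a b Hab) as [m [Hm _]].
  { intros c Hc. apply (continuity_pt_plus (fun x => Rabs (Re (f x))) (fun x => Rabs (Im (f x)))).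
    - apply (continuity_pt_comp (fun x => Re (f x)) Rabs); [|apply Rcontinuity_abs].
      apply continuity_pt_filterlim, continuous_Re_comp, Hf, Hc.
    - apply (continuity_pt_comp (fun x => Im (f x)) Rabs); [|apply Rcontinuity_abs].
      apply continuity_pt_filterlim, continuous_Im_comp, Hf, Hc. }
  exists (Rabs (Re (f m)) + Rabs (Im (f m))). intros x Hx.
  eapply Rle_trans; [apply Cmod_le_parts | apply Hm, Hx].
Qed.

Definition taylor_coef (G : C -> C) (k : nat) : C := (fourier_integral G (- INR k) (1 / 2) * RtoC (2 ^ k))%C.

Lemma fourier_integral_taylor_coef G k rho : Cdifferentiable_on_disc G -> 0 < rho < 1 ->
  fourier_integral G (- INR k) rho = (taylor_coef G k * RtoC (rho ^ k))%C.
Proof.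
  intros HG Hr. pose proof (fourier_integral_neg_rescale G k (1 / 2) rho HG ltac:(lra) Hr) as S.
  unfold taylor_coef.
  assert (P : (RtoC ((1 / 2) ^ k) * RtoC (2 ^ k))%C = 1%C).
  { rewrite <- RtoC_mult, <- Rpow_mult_distr. replace (1 / 2 * 2) with 1 by field. rewrite pow1. reflexivity. }
  rewrite <- (Cmult_1_r (fourier_integral G (- INR k) rho)), <- P.
  transitivity (fourier_integral G (- INR k) rho * RtoC ((1 / 2) ^ k) * RtoC (2 ^ k))%C; [ring|].
  rewrite <- S. ring.
Qed.

Definition cauchy_ratio (z : C) (rho th : R) : C := (z * RtoC (/ rho) * cis (- th))%C.

Definition cauchy_remainder (G : C -> C) (z : C) (rho : R) (N : nat) (th : R) : C :=
  (G (RtoC rho * cis th) * cauchy_ratio z rho th ^ N / (1 - cauchy_ratio z rho th))%C.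

Lemma Cmod_cauchy_ratio z rho th : 0 < rho -> Cmod (cauchy_ratio z rho th) = Cmod z / rho.
Proof.
  intros Hr. unfold cauchy_ratio. rewrite !Cmod_mult, Cmod_cis, Cmod_R, Rabs_right.
  - field. lra.
  - apply Rle_ge, Rlt_le, Rinv_0_lt_compat, Hr.
Qed.

Lemma Cmod_one_minus_cauchy_ratio z rho th : Cmod z < rho ->
  0 < 1 - Cmod z / rho <= Cmod (1 - cauchy_ratio z rho th)%C.
Proof.
  intros Hr. pose proof (Cmod_ge_0 z).
  pose proof (Cmod_one_minus_ge (cauchy_ratio z rho th)) as L.
  rewrite Cmod_cauchy_ratio in L by lra.
  split; [|exact L].
  assert (Cmod z / rho < 1) by (apply Rmult_lt_reg_r with rho; [lra|]; unfold Rdiv;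
    rewrite Rmult_assoc, Rinv_l; lra).
  lra.
Qed.

Lemma cauchy_ratio_neq1 z rho th : Cmod z < rho -> (1 - cauchy_ratio z rho th)%C <> 0%C.
Proof.
  intros Hr K. pose proof (Cmod_one_minus_cauchy_ratio z rho th Hr). rewrite K, Cmod_0 in H. lra.
Qed.

Lemma ccontinuous_on_cauchy_remainder G z rho N : Cdifferentiable_on_disc G -> Cmod z < rho < 1 ->
  ccontinuous_on (cauchy_remainder G z rho N) 0 (2 * PI).
Proof.
  intros HG Hr th _. pose proof (Cmod_ge_0 z).
  assert (Cq : ccontinuous (cauchy_ratio z rho) th).
  { apply ccontinuous_scal.
    apply (continuous_comp (fun t => - t) cis); [|apply ccontinuous_cis].
    apply (@continuous_opp R_UniformSpace R_AbsRing R_NormedModule (fun t => t)), continuous_id. }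
  apply ccontinuous_mult; [apply ccontinuous_mult|].
  - apply ccontinuous_on_centered_circle; auto; lra.
  - clear -Cq. induction N as [|N IH]; simpl; [apply ccontinuous_const | apply ccontinuous_mult; auto].
  - apply ccontinuous_inv; [apply ccontinuous_minus; [apply ccontinuous_const | apply Cq]|].
    apply cauchy_ratio_neq1. lra.
Qed.

Definition taylor_term (G : C -> C) (z : C) (rho : R) (k : nat) (th : R) : C :=
  ((z * RtoC (/ rho)) ^ k * (G (RtoC rho * cis th) * cis (- INR k * th)))%C.

(* Expanding [1 / (w - z) = (1 / w) (1 + q + ... + q^(N-1) + q^N / (1 - q))], [q = z / w],
   in the Cauchy integrand on the circle [|w| = rho]. *)
Lemma cauchy_kernel_expansion G z rho N th : Cmod z < rho ->
  (cauchy_kernel G z (0 + RtoC rho * cis th) * (RtoC rho * (Ci * cis th)))%C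
  = (Ci * (Csum (fun k => taylor_term G z rho k th) N + cauchy_remainder G z rho N th))%C.
Proof.
  intros Hr. pose proof (Cmod_ge_0 z).
  set (q := cauchy_ratio z rho th).
  assert (Hq1 : (1 - q)%C <> 0%C) by (apply cauchy_ratio_neq1, Hr).
  assert (K1 : (RtoC rho * cis th - z)%C = (RtoC rho * cis th * (1 - q))%C).
  { unfold q, cauchy_ratio. rewrite <- cis_inv, RtoC_inv by lra. field.
    split; [apply cis_neq0 | intros K; injection K; lra]. }
  assert (K2 : Csum (fun k => taylor_term G z rho k th) N
               = (G (RtoC rho * cis th) * Csum (fun k => (q ^ k)%C) N)%C).
  { rewrite Csum_mult_l. apply Csum_ext. intros k. unfold taylor_term, q, cauchy_ratio.
    rewrite (Cpow_mult_l (z * RtoC (/ rho)) (cis (- th)) k), cis_pow.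
    replace (INR k * - th) with (- INR k * th) by ring. ring. }
  assert (K3 : Csum (fun k => (q ^ k)%C) N = ((1 - q ^ N) / (1 - q))%C)
    by (rewrite <- Csum_geometric; field; exact Hq1).
  unfold cauchy_kernel, cauchy_remainder. fold q.
  rewrite Cplus_0_l, K2, K3, K1. field.
  split; [exact Hq1|]. split; [apply cis_neq0 | intros K; injection K; lra].
Qed.

Lemma CInt_taylor_term G z rho k : Cdifferentiable_on_disc G -> 0 < rho < 1 ->
  CInt (taylor_term G z rho k) 0 (2 * PI) = (taylor_coef G k * z ^ k)%C.
Proof.
  intros HG Hr. pose proof twoPI_pos. unfold taylor_term.
  rewrite CInt_scal; [|lra | intros th _; apply ccontinuous_fourier_integrand; auto; lra].
  fold (fourier_integral G (- INR k) rho). rewrite fourier_integral_taylor_coef by assumption.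
  rewrite Cpow_mult_l, <- RtoC_pow.
  replace (taylor_coef G k * z ^ k)%C with (taylor_coef G k * z ^ k * RtoC ((/ rho) ^ k * rho ^ k))%C
    by (rewrite <- Rpow_mult_distr, Rinv_l, pow1 by lra; ring).
  rewrite RtoC_mult. ring.
Qed.

Lemma cauchy_taylor_remainder (G : C -> C) (z : C) (rho : R) (N : nat) : Cdifferentiable_on_disc G ->
  Cmod z < rho < 1 ->
  (RtoC (2 * PI) * G z - Csum (fun k => taylor_coef G k * z ^ k) N)%C
  = CInt (cauchy_remainder G z rho N) 0 (2 * PI).
Proof.
  intros HG Hr. pose proof twoPI_pos. pose proof (Cmod_ge_0 z).
  assert (Cterm : forall k, ccontinuous_on (taylor_term G z rho k) 0 (2 * PI))
    by (intros k th _; apply ccontinuous_scal, ccontinuous_fourier_integrand; auto; lra).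
  pose proof (ccontinuous_on_Csum _ 0 (2 * PI) N Cterm) as Csum_term.
  pose proof (ccontinuous_on_cauchy_remainder G z rho N HG Hr) as Crem.
  pose proof (cauchy_formula G z rho HG Hr) as CF. unfold circle_integral in CF.
  rewrite (CInt_ext _ _ 0 (2 * PI) ltac:(lra) (fun th _ => cauchy_kernel_expansion G z rho N th ltac:(lra))) in CF.
  rewrite CInt_scal in CF
    by first [lra | intros th Hth; apply ccontinuous_plus; [exact (Csum_term th Hth) | exact (Crem th Hth)]].
  rewrite CInt_plus in CF by first [lra | exact Csum_term | exact Crem].
  rewrite CInt_Csum in CF by first [lra | exact Cterm].
  rewrite (Csum_ext _ _ N (fun k => CInt_taylor_term G z rho k HG ltac:(lra))) in CF.
  assert (Ci_neq0 : Ci <> 0%C) by (intros K; injection K; lra).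
  replace (RtoC (2 * PI) * G z)%C with (/ Ci * (RtoC (2 * PI) * Ci * G z))%C by (field; exact Ci_neq0).
  rewrite <- CF. field. exact Ci_neq0.
Qed.

Lemma cauchy_taylor_error (G : C -> C) (z : C) (rho M : R) (N : nat) : Cdifferentiable_on_disc G ->
  Cmod z < rho < 1 -> (forall th, 0 <= th <= 2 * PI -> Cmod (G (RtoC rho * cis th)%C) <= M) ->
  Cmod (RtoC (2 * PI) * G z - Csum (fun k => taylor_coef G k * z ^ k) N)%C
    <= M * (Cmod z / rho) ^ N / (1 - Cmod z / rho) * (2 * PI - 0).
Proof.
  intros HG Hr HM. pose proof twoPI_pos. pose proof (Cmod_ge_0 z).
  rewrite (cauchy_taylor_remainder G z rho N HG Hr).
  apply CInt_norm; [lra | apply ccontinuous_on_cauchy_remainder; auto |].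
  intros th Hth. unfold cauchy_remainder.
  pose proof (Cmod_one_minus_cauchy_ratio z rho th ltac:(lra)) as L.
  unfold Cdiv. rewrite !Cmod_mult, Cmod_pow, Cmod_cauchy_ratio, Cmod_inv by (lra || apply cauchy_ratio_neq1; lra).
  pose proof (HM th Hth). pose proof (Cmod_ge_0 (G (RtoC rho * cis th)%C)).
  assert (0 <= (Cmod z / rho) ^ N) by (apply pow_le, Rdiv_le_0_compat; lra).
  unfold Rdiv at 2. apply Rmult_le_compat.
  - apply Rmult_le_pos; lra.
  - left. apply Rinv_0_lt_compat. lra.
  - apply Rmult_le_compat_r; lra.
  - apply Rinv_le_contravar; lra.
Qed.

Lemma taylor_series_converges (G : C -> C) (z : C) : Cdifferentiable_on_disc G -> Cmod z < 1 ->
  forall eps, 0 < eps -> exists N0, forall N, (N0 <= N)%nat ->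
  Cmod (RtoC (2 * PI) * G z - Csum (fun k => taylor_coef G k * z ^ k) N)%C <= eps.
Proof.
  intros HG Hz eps Heps. pose proof twoPI_pos. pose proof (Cmod_ge_0 z).
  set (rho := (1 + Cmod z) / 2).
  assert (Hr : Cmod z < rho < 1) by (unfold rho; lra).
  destruct (ccontinuous_on_segment_bounded (fun th => G (RtoC rho * cis th)%C) 0 (2 * PI))
    as [M HM]; [lra | intros th _; apply ccontinuous_on_centered_circle; auto; lra|].
  assert (HM0 : 0 <= M).
  { pose proof (HM 0 ltac:(lra)) as K. pose proof (Cmod_ge_0 (G (RtoC rho * cis 0)%C)). simpl in K. lra. }
  set (q0 := Cmod z / rho).
  assert (Hq0 : 0 <= q0 < 1).
  { unfold q0. split; [apply Rdiv_le_0_compat; lra|].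
    apply Rmult_lt_reg_r with rho; [lra|]. unfold Rdiv. rewrite Rmult_assoc, Rinv_l; lra. }
  set (y := eps * (1 - q0) / ((M + 1) * (2 * PI))).
  assert (Hy : 0 < y) by (unfold y; apply Rdiv_lt_0_compat; apply Rmult_lt_0_compat; lra).
  destruct (pow_lt_1_zero q0 ltac:(rewrite Rabs_right; lra) y Hy) as [N0 HN0].
  exists N0. intros N HN.
  eapply Rle_trans; [apply (cauchy_taylor_error G z rho M N HG Hr HM)|]. fold q0.
  specialize (HN0 N HN). rewrite Rabs_right in HN0 by (apply Rle_ge, pow_le; lra).
  assert (0 <= q0 ^ N) by (apply pow_le; lra).
  apply Rle_trans with ((M + 1) * y / (1 - q0) * (2 * PI - 0)).
  - apply Rmult_le_compat_r; [lra|]. unfold Rdiv. apply Rmult_le_compat_r.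
    + left. apply Rinv_0_lt_compat. lra.
    + apply Rmult_le_compat; lra.
  - right. unfold y. field. split; lra.
Qed.

(** * Fourier coefficients of [Re ((1 - conj w) G w)] *)

Definition weighted_re (G : C -> C) (rho th : R) : R :=
  Re ((1 - Cconj (RtoC rho * cis th)) * G (RtoC rho * cis th))%C.

Lemma Cconj_RtoC r : Cconj (RtoC r) = RtoC r.
Proof. unfold Cconj, RtoC; simpl. f_equal. ring. Qed.

Lemma ccontinuous_weighted_re G rho th : Cdifferentiable_on_disc G -> 0 <= rho < 1 ->
  ccontinuous (fun t => RtoC (weighted_re G rho t)) th.
Proof.
  intros HG Hr. apply ccontinuous_RtoC, continuous_Re_comp. apply ccontinuous_mult.
  - apply ccontinuous_minus; [apply ccontinuous_const|].
    apply ccontinuous_conj, ccontinuous_scal, ccontinuous_cis.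
  - apply ccontinuous_on_centered_circle; assumption.
Qed.

Lemma fourier_weighted_re G rho x : Cdifferentiable_on_disc G -> 0 < rho < 1 ->
  CInt (fun th => (RtoC (weighted_re G rho th) * cis (x * th))%C) 0 (2 * PI) =
  ((/ 2) * ((fourier_integral G x rho - RtoC rho * fourier_integral G (x - 1) rho) +
            Cconj (fourier_integral G (- x) rho - RtoC rho * fourier_integral G (- x - 1) rho)))%C.
Proof.
  intros HG Hr. pose proof twoPI_pos.
  set (f := fun y th => (G (RtoC rho * cis th) * cis (y * th))%C).
  assert (Cf : forall y, ccontinuous_on (f y) 0 (2 * PI))
    by (intros y th _; apply ccontinuous_fourier_integrand; auto; lra).
  assert (Cg : forall y, ccontinuous_on (fun th => (f y th - RtoC rho * f (y - 1)%R th)%C) 0 (2 * PI))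
    by (intros y th Hth; apply ccontinuous_minus; [apply Cf, Hth | apply ccontinuous_scal, Cf, Hth]).
  assert (Hpt : forall th, (RtoC (weighted_re G rho th) * cis (x * th))%C =
    ((/ 2) * ((f x th - RtoC rho * f (x - 1)%R th)
              + Cconj (f (- x)%R th - RtoC rho * f (- x - 1)%R th)))%C).
  { intros th. unfold weighted_re, f. rewrite re_alt.
    rewrite !Cmult_conj, !Cminus_conj, !Cmult_conj, !cis_conj, !Cconj_RtoC.
    replace (cis (- ((x - 1) * th))) with (cis (- (x * th)) * cis th)%C by (rewrite cis_add; f_equal; ring).
    replace (cis ((x - 1) * th)) with (cis (x * th) * cis (- th))%C by (rewrite cis_add; f_equal; ring).
    replace (cis (- (- x * th))) with (cis (x * th)) by (f_equal; ring).
    replace (cis (- ((- x - 1) * th))) with (cis (x * th) * cis th)%C by (rewrite cis_add; f_equal; ring).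
    replace (cis (- x * th)) with (cis (- (x * th))) by (f_equal; ring).
    rewrite <- !cis_inv.
    pose proof (cis_neq0 th). pose proof (cis_neq0 (x * th)). field; auto. }
  rewrite (CInt_ext _ _ 0 (2 * PI) ltac:(lra) (fun th _ => Hpt th)).
  rewrite CInt_scal
    by first [lra | intros th Hth; apply ccontinuous_plus; [apply Cg, Hth | apply ccontinuous_conj, Cg, Hth]].
  rewrite CInt_plus by first [lra | exact (Cg x) | intros th Hth; apply ccontinuous_conj, Cg, Hth].
  rewrite CInt_conj by first [lra | exact (Cg (- x))].
  assert (Cs : forall y, ccontinuous_on (fun th => (RtoC rho * f y th)%C) 0 (2 * PI))
    by (intros y th Hth; apply ccontinuous_scal, Cf, Hth).
  rewrite (CInt_minus (f x) (fun th => (RtoC rho * f (x - 1)%R th)%C)),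
          (CInt_minus (f (- x)%R) (fun th => (RtoC rho * f (- x - 1)%R th)%C)),
          (CInt_scal _ (f (x - 1)%R)), (CInt_scal _ (f (- x - 1)%R))
    by (match goal with
        | |- ccontinuous_on (f _) _ _ => apply Cf
        | |- ccontinuous_on _ _ _ => apply Cs
        | _ => lra end).
  reflexivity.
Qed.

Definition weighted_re_bounded (G : C -> C) : Prop :=
  forall rho th, 0 < rho < 1 -> Rabs (weighted_re G rho th) <= 1 - rho ^ 2.

Lemma fourier_weighted_re_bound G rho x : Cdifferentiable_on_disc G -> weighted_re_bounded G -> 0 < rho < 1 ->
  Cmod ((fourier_integral G x rho - RtoC rho * fourier_integral G (x - 1) rho) +
        Cconj (fourier_integral G (- x) rho - RtoC rho * fourier_integral G (- x - 1) rho))%C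
  <= 8 * PI * (1 - rho).
Proof.
  intros HG HB Hr. pose proof twoPI_pos.
  assert (Hint : Cmod (CInt (fun th => (RtoC (weighted_re G rho th) * cis (x * th))%C) 0 (2 * PI))
                 <= (1 - rho ^ 2) * (2 * PI - 0)).
  { apply CInt_norm; [lra | |].
    - intros th _. apply ccontinuous_mult; [apply ccontinuous_weighted_re; auto; lra | apply ccontinuous_cis_scal].
    - intros th _. rewrite Cmod_mult, Cmod_cis, Cmod_R, Rmult_1_r. apply HB, Hr. }
  rewrite fourier_weighted_re, Cmod_mult, Cmod_inv, Cmod_R, Rabs_right in Hint
    by (auto; try lra; intros K; injection K; lra).
  set (S := Cmod _) in *.
  assert (1 - rho ^ 2 <= 2 * (1 - rho)) by nra.
  nra.
Qed.

Lemma eq0_of_le_linear_at_1 (T : C) (K : R) :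
  (forall rho, 1 / 2 <= rho < 1 -> Cmod T <= K * (1 - rho)) -> T = 0%C.
Proof.
  intros H. apply (Cmod_le_linear_eq0 T K). intros d Hd.
  replace d with (1 - (1 - d)) by ring. apply H. lra.
Qed.

Lemma Cmod_sub_scal_pow (a : C) (m : nat) (rho : R) : 0 <= rho <= 1 ->
  Cmod (a - a * RtoC (rho ^ m)) <= Cmod a * INR m * (1 - rho).
Proof.
  intros Hr.
  assert (Hm : 0 <= 1 - rho ^ m <= INR m * (1 - rho)).
  { induction m as [|m IH]; [simpl; lra|]. rewrite S_INR. simpl.
    assert (0 <= rho ^ m) by (apply pow_le; lra). nra. }
  replace (a - a * RtoC (rho ^ m))%C with (a * RtoC (1 - rho ^ m))%C by (rewrite RtoC_minus; ring).
  rewrite Cmod_mult, Cmod_R, Rabs_right, Rmult_assoc by lra.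
  apply Rmult_le_compat_l; [apply Cmod_ge_0 | lra].
Qed.

Section TaylorRelations.

Variable G : C -> C.
Hypothesis HG : Cdifferentiable_on_disc G.
Hypothesis HB : weighted_re_bounded G.

Lemma taylor_coef_succ k : (2 <= k)%nat -> taylor_coef G (S k) = taylor_coef G k.
Proof.
  intros Hk. symmetry. apply Ceq_minus.
  set (a := taylor_coef G k). set (b := taylor_coef G (S k)).
  apply eq0_of_le_linear_at_1 with (K := 8 * PI + Cmod a * INR k + Cmod b * INR (S (S k))).
  intros rho Hr.
  pose proof (fourier_weighted_re_bound G rho (- INR k) HG HB ltac:(lra)) as V.
  replace (- INR k - 1) with (- INR (S k)) in V by (rewrite S_INR; ring).
  replace (- - INR k) with (INR k) in V by ring.
  replace (INR k - 1) with (INR (k - 1)) in V by (rewrite minus_INR by lia; simpl; ring).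
  rewrite !fourier_integral_taylor_coef in V by (auto; lra).
  rewrite !fourier_integral_pos in V by (auto; lia || lra).
  fold a b in V.
  set (Y := (a * RtoC (rho ^ k) - RtoC rho * (b * RtoC (rho ^ S k)))%C) in V.
  replace (Y + Cconj (0 - RtoC rho * 0))%C with Y in V
    by (rewrite Cminus_conj, Cmult_conj, Cconj_RtoC; unfold Cconj; simpl; f_equal; ring).
  replace (a - b)%C with (Y + ((a - a * RtoC (rho ^ k)) - (b - b * RtoC (rho ^ S (S k)))))%C
    by (unfold Y; replace (rho ^ S (S k)) with (rho * rho ^ S k) by (simpl; ring); rewrite RtoC_mult; ring).
  pose proof (Cmod_sub_scal_pow a k rho ltac:(lra)).
  pose proof (Cmod_sub_scal_pow b (S (S k)) rho ltac:(lra)).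
  pose proof (Cmod_triangle Y ((a - a * RtoC (rho ^ k)) - (b - b * RtoC (rho ^ S (S k))))).
  pose proof (Cmod_sub_le (a - a * RtoC (rho ^ k)) (b - b * RtoC (rho ^ S (S k)))).
  nra.
Qed.

Lemma taylor_coef_1 : taylor_coef G 1 = (taylor_coef G 2 + Cconj (taylor_coef G 0))%C.
Proof.
  apply Ceq_minus.
  set (a0 := taylor_coef G 0). set (a1 := taylor_coef G 1). set (a2 := taylor_coef G 2).
  apply eq0_of_le_linear_at_1 with (K := 8 * PI + Cmod a1 * INR 1 + Cmod a2 * INR 3 + Cmod (Cconj a0) * INR 1).
  intros rho Hr.
  pose proof (fourier_weighted_re_bound G rho (- INR 1) HG HB ltac:(lra)) as V.
  replace (- INR 1 - 1) with (- INR 2) in V by (simpl; ring).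
  replace (- - INR 1 - 1) with (- INR 0) in V by (simpl; ring).
  replace (- - INR 1) with (INR 1) in V by ring.
  rewrite !fourier_integral_taylor_coef in V by (auto; lra).
  rewrite fourier_integral_pos in V by (auto; lia || lra).
  fold a0 a1 a2 in V.
  rewrite Cminus_conj, !Cmult_conj, !Cconj_RtoC in V.
  set (Y := (a1 * RtoC (rho ^ 1) - RtoC rho * (a2 * RtoC (rho ^ 2))
             + (0 - RtoC rho * (Cconj a0 * RtoC (rho ^ 0))))%C) in V.
  replace (a1 - (a2 + Cconj a0))%C with
    (Y + ((a1 - a1 * RtoC (rho ^ 1)) - (a2 - a2 * RtoC (rho ^ 3)) - (Cconj a0 - Cconj a0 * RtoC (rho ^ 1))))%C.
  2: { unfold Y. rewrite !pow_1, pow_O. replace (rho ^ 3) with (rho * rho ^ 2) by ring. rewrite RtoC_mult. ring. }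
  pose proof (Cmod_sub_scal_pow a1 1 rho ltac:(lra)).
  pose proof (Cmod_sub_scal_pow a2 3 rho ltac:(lra)).
  pose proof (Cmod_sub_scal_pow (Cconj a0) 1 rho ltac:(lra)).
  set (U := (a1 - a1 * RtoC (rho ^ 1))%C) in *. set (W := (a2 - a2 * RtoC (rho ^ 3))%C) in *.
  set (Z := (Cconj a0 - Cconj a0 * RtoC (rho ^ 1))%C) in *.
  pose proof (Cmod_triangle Y (U - W - Z)). pose proof (Cmod_sub_le (U - W) Z). pose proof (Cmod_sub_le U W).
  nra.
Qed.

Lemma Re_taylor_coef_0 : Re (taylor_coef G 0) = Re (taylor_coef G 1).
Proof.
  set (a0 := taylor_coef G 0). set (a1 := taylor_coef G 1).
  assert (T0 : RtoC (Re a0 - Re a1) = 0%C).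
  { apply eq0_of_le_linear_at_1 with (K := 4 * PI + 2 * Rabs (Re a1)). intros rho Hr.
    pose proof (fourier_weighted_re_bound G rho (- INR 0) HG HB ltac:(lra)) as V.
    replace (- INR 0 - 1) with (- INR 1) in V by (simpl; ring).
    replace (- - INR 0 - 1) with (- INR 1) in V by (simpl; ring).
    replace (- - INR 0) with (- INR 0) in V by (simpl; ring).
    rewrite !fourier_integral_taylor_coef in V by (auto; lra). fold a0 a1 in V.
    set (X := (a0 * RtoC (rho ^ 0) - RtoC rho * (a1 * RtoC (rho ^ 1)))%C) in V.
    replace (X + Cconj X)%C with (RtoC (2 * (Re a0 - rho ^ 2 * Re a1))) in V
      by (unfold X; destruct a0, a1; unfold Cconj, RtoC, Cplus, Cminus, Copp, Cmult, Re; simpl;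
          f_equal; ring).
    rewrite Cmod_R, Rabs_mult, (Rabs_right 2) in V by lra. rewrite Cmod_R.
    replace (Re a0 - Re a1) with ((Re a0 - rho ^ 2 * Re a1) - (1 - rho ^ 2) * Re a1) by ring.
    eapply Rle_trans; [apply Rabs_triang|]. rewrite Rabs_Ropp, Rabs_mult, (Rabs_right (1 - rho ^ 2)) by nra.
    assert (1 - rho ^ 2 <= 2 * (1 - rho)) by nra.
    assert ((1 - rho ^ 2) * Rabs (Re a1) <= 2 * (1 - rho) * Rabs (Re a1))
      by (apply Rmult_le_compat_r; [apply Rabs_pos | lra]).
    lra. }
  pose proof (f_equal Re T0) as E. change (Re a0 - Re a1 = 0) in E. lra.
Qed.

Lemma Csum_taylor_closed_form (z : C) (n : nat) : z <> 1%C ->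
  Csum (fun k => taylor_coef G k * z ^ k)%C (S (S n)) =
  (taylor_coef G 0 + taylor_coef G 1 * z + taylor_coef G 2 * (z * z - z ^ S (S n)) / (1 - z))%C.
Proof.
  intros Hz. assert (Hz1 : (1 - z)%C <> 0%C) by (intros K; apply Hz; symmetry; apply Ceq_minus, K).
  induction n as [|n IH].
  - simpl. field. exact Hz1.
  - change (Csum (fun k => taylor_coef G k * z ^ k)%C (S (S (S n))))
      with (Csum (fun k => taylor_coef G k * z ^ k)%C (S (S n)) + taylor_coef G (S (S n)) * z ^ S (S n))%C.
    rewrite IH.
    assert (Hc : taylor_coef G (S (S n)) = taylor_coef G 2).
    { clear IH. induction n as [|n IHn]; [reflexivity|]. rewrite taylor_coef_succ by lia. exact IHn. }
    rewrite Hc. change (z ^ S (S (S n)))%C with (z * z ^ S (S n))%C. field. exact Hz1.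
Qed.

Theorem taylor_closed_form (z : C) : Cmod z < 1 ->
  (RtoC (2 * PI) * G z)%C
  = (taylor_coef G 0 + taylor_coef G 1 * z + taylor_coef G 2 * (z * z) / (1 - z))%C.
Proof.
  intros Hz. pose proof (Cmod_ge_0 z).
  assert (Hz1 : z <> 1%C) by (intros K; rewrite K, Cmod_1 in Hz; lra).
  assert (H1z : (1 - z)%C <> 0%C) by (intros K; apply Hz1; symmetry; apply Ceq_minus, K).
  pose proof (Cmod_one_minus_ge z) as L1.
  apply Ceq_minus, (Cmod_le_linear_eq0 _ 1). intros eps [Heps _].
  set (a2 := taylor_coef G 2).
  destruct (taylor_series_converges G z HG Hz (eps / 2) ltac:(lra)) as [N0 HN0].
  set (y := eps / 2 * (1 - Cmod z) / (Cmod a2 + 1)).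
  assert (Hy : 0 < y)
    by (unfold y; apply Rdiv_lt_0_compat; [apply Rmult_lt_0_compat; lra | pose proof (Cmod_ge_0 a2); lra]).
  destruct (pow_lt_1_zero (Cmod z) ltac:(rewrite Rabs_right; lra) y Hy) as [N1 HN1].
  set (n := (N0 + N1)%nat).
  specialize (HN0 (S (S n)) ltac:(unfold n; lia)).
  specialize (HN1 (S (S n)) ltac:(unfold n; lia)).
  rewrite Csum_taylor_closed_form in HN0 by exact Hz1. fold a2 in HN0.
  rewrite Rabs_right in HN1 by (apply Rle_ge, pow_le; lra).
  set (S2 := (taylor_coef G 0 + taylor_coef G 1 * z + a2 * (z * z - z ^ S (S n)) / (1 - z))%C) in HN0.
  replace (RtoC (2 * PI) * G z - (taylor_coef G 0 + taylor_coef G 1 * z + a2 * (z * z) / (1 - z)))%C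
    with ((RtoC (2 * PI) * G z - S2) - a2 * z ^ S (S n) / (1 - z))%C by (unfold S2; field; exact H1z).
  assert (Htail : Cmod (a2 * z ^ S (S n) / (1 - z)) <= eps / 2).
  { unfold Cdiv. rewrite !Cmod_mult, Cmod_inv, Cmod_pow by exact H1z.
    pose proof (Cmod_ge_0 a2).
    apply Rle_trans with (Cmod a2 * y * / (1 - Cmod z)).
    - apply Rmult_le_compat.
      + apply Rmult_le_pos; [lra | apply pow_le; lra].
      + left. apply Rinv_0_lt_compat, Cmod_gt_0, H1z.
      + apply Rmult_le_compat_l; lra.
      + apply Rinv_le_contravar; lra.
    - apply Rle_trans with ((Cmod a2 + 1) * y * / (1 - Cmod z)).
      + apply Rmult_le_compat_r; [left; apply Rinv_0_lt_compat; lra|]. nra.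
      + right. unfold y. field. lra. }
  eapply Rle_trans; [apply Cmod_sub_le | lra].
Qed.

End TaylorRelations.

(** * The equation [F + z conj F = G] *)

Lemma Re_weighted_sum (w f : C) :
  Re ((1 - Cconj w) * (f + w * Cconj f))%C = (1 - Cmod w ^ 2) * Re f.
Proof.
  rewrite Cmod2_alt. destruct w, f. unfold Re, Im, Cconj, Cmult, Cplus, Cminus, Copp; simpl. ring.
Qed.

Lemma Re_RtoC_mult (r : R) (w : C) : Re (RtoC r * w)%C = r * Re w.
Proof. destruct w. unfold Re, RtoC, Cmult; simpl. ring. Qed.

Lemma plus_z_conj_eq0 (z f : C) : Cmod z < 1 -> (f + z * Cconj f)%C = 0%C -> f = 0%C.
Proof.
  intros Hz Hf.
  assert (Ef : f = (- (z * Cconj f))%C) by (apply Ceq_minus; rewrite <- Hf; ring).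
  assert (M : Cmod f = Cmod z * Cmod f) by (rewrite Ef at 1; rewrite Cmod_opp, Cmod_mult, Cmod_conj; reflexivity).
  apply Cmod_eq_0. pose proof (Cmod_ge_0 f). pose proof (Cmod_ge_0 z). nra.
Qed.

(* At [z = 1 - t + i t] one has [(1 - conj z) / (1 - z) = i] and [1 - |z|^2 = 2 t (1 - t)]. *)
Definition test_point (t : R) : C := (1 - t, t).

Lemma Cmod_test_point t : Cmod (test_point t) ^ 2 = 1 - 2 * t * (1 - t).
Proof. rewrite Cmod2_alt. unfold test_point, Re, Im; simpl. ring. Qed.

Lemma Re_at_test_point (b t : R) : 0 < t ->
  Re ((1 - Cconj (test_point t)) * ((0, b) * test_point t / (1 - test_point t)))%C = - b * (1 - t).
Proof.
  intros Ht. unfold test_point, Cdiv, Cinv, Cmult, Cminus, Cplus, Copp, Cconj, RtoC, Re; simpl.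
  field. replace ((1 + - (1 - t)) * (1 + - (1 - t)) + - t * - t) with (2 * (t * t)) by ring. nra.
Qed.

Section BoundedRealPart.

Variable F : C -> C.
Hypothesis HF : forall z, Cmod z < 1 -> 0 <= Re (F z) <= 1.

Let G := fun z => (F z + z * Cconj (F z))%C.

Hypothesis HG : Cdifferentiable_on_disc G.

Lemma weighted_re_bounded_of_Re_bounded : weighted_re_bounded G.
Proof.
  intros rho th Hr. unfold weighted_re, G. rewrite Re_weighted_sum, Cmod_scal_cis by lra.
  destruct (HF (RtoC rho * cis th)) as [F0 F1]; [rewrite Cmod_scal_cis; lra|].
  assert (0 < 1 - rho ^ 2) by nra.
  rewrite Rabs_mult, !Rabs_right by lra. nra.
Qed.

Lemma taylor_coef_0_of_F : taylor_coef G 0 = (RtoC (2 * PI) * F 0%C)%C.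
Proof.
  pose proof (taylor_closed_form G HG weighted_re_bounded_of_Re_bounded 0%C ltac:(rewrite Cmod_0; lra)) as E0.
  replace (taylor_coef G 0 + taylor_coef G 1 * 0 + taylor_coef G 2 * (0 * 0) / (1 - 0))%C
    with (taylor_coef G 0) in E0 by (field; intros K; injection K; lra).
  rewrite <- E0. unfold G. ring.
Qed.

Lemma taylor_difference z : Cmod z < 1 ->
  (taylor_coef G 2 * z / (1 - z))%C = (RtoC (2 * PI) * ((F z - F 0%C) + z * Cconj (F z - F 0%C)))%C.
Proof.
  intros Hz.
  assert (Hz1 : (1 - z)%C <> 0%C).
  { intros K. apply Ceq_minus in K. rewrite <- K, Cmod_1 in Hz. lra. }
  pose proof (taylor_closed_form G HG weighted_re_bounded_of_Re_bounded z Hz) as Ez.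
  pose proof (taylor_coef_1 G HG weighted_re_bounded_of_Re_bounded) as E1.
  transitivity (RtoC (2 * PI) * G z - taylor_coef G 0 - Cconj (taylor_coef G 0) * z)%C.
  - rewrite Ez, E1. field. exact Hz1.
  - rewrite taylor_coef_0_of_F. unfold G.
    rewrite Cmult_conj, Cconj_RtoC, Cminus_conj. ring.
Qed.

Lemma Re_taylor_coef_2 : Re (taylor_coef G 2) = 0.
Proof.
  pose proof (taylor_coef_1 G HG weighted_re_bounded_of_Re_bounded) as E1.
  pose proof (Re_taylor_coef_0 G HG weighted_re_bounded_of_Re_bounded) as E0.
  rewrite E1 in E0.
  destruct (taylor_coef G 0), (taylor_coef G 2). unfold Re, Cconj, Cplus in *; simpl in *. lra.
Qed.

Lemma Re_weighted_taylor_difference z : Cmod z < 1 ->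
  Re ((1 - Cconj z) * (taylor_coef G 2 * z / (1 - z)))%C = 2 * PI * ((1 - Cmod z ^ 2) * (Re (F z) - Re (F 0%C))).
Proof.
  intros Hz. rewrite taylor_difference by exact Hz.
  replace ((1 - Cconj z) * (RtoC (2 * PI) * ((F z - F 0%C) + z * Cconj (F z - F 0%C))))%C
    with (RtoC (2 * PI) * ((1 - Cconj z) * ((F z - F 0%C) + z * Cconj (F z - F 0%C))))%C by ring.
  rewrite Re_RtoC_mult, Re_weighted_sum.
  destruct (F z), (F 0%C). unfold Re, Cminus, Cplus, Copp; simpl. ring.
Qed.

Lemma Rabs_Im_taylor_coef_2_le t : 0 < t <= 1 / 2 -> Rabs (Im (taylor_coef G 2)) <= 4 * PI * t.
Proof.
  intros Ht. pose proof PI_RGT_0. set (b := Im (taylor_coef G 2)). set (zt := test_point t).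
  pose proof (Cmod_test_point t) as Hm. fold zt in Hm.
  assert (Hzt : Cmod zt < 1) by (pose proof (Cmod_ge_0 zt); nra).
  pose proof (Re_weighted_taylor_difference zt Hzt) as K.
  replace (taylor_coef G 2) with ((0, b) : C) in K
    by (pose proof Re_taylor_coef_2; unfold b; destruct (taylor_coef G 2); unfold Re, Im in *; simpl in *;
        subst; reflexivity).
  unfold zt in K. rewrite Re_at_test_point in K by lra. fold zt in K. rewrite Hm in K.
  destruct (HF zt Hzt) as [F1 F2]. destruct (HF 0%C ltac:(rewrite Cmod_0; lra)) as [F3 F4].
  assert (Eb : b = - (4 * PI * t * (Re (F zt) - Re (F 0%C)))).
  { apply Rmult_eq_reg_r with (1 - t); [|lra]. apply Ropp_eq_reg. rewrite Ropp_mult_distr_l, K. ring. }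
  rewrite Eb, Rabs_Ropp, Rabs_mult, (Rabs_right (4 * PI * t)) by nra.
  assert (Rabs (Re (F zt) - Re (F 0%C)) <= 1) by (apply Rabs_le; lra).
  assert (0 <= 4 * PI * t) by nra. nra.
Qed.

Lemma taylor_coef_2_eq0 : taylor_coef G 2 = 0%C.
Proof.
  assert (Hb : RtoC (Im (taylor_coef G 2)) = 0%C).
  { apply Cmod_le_linear_eq0 with (K := 4 * PI). intros t Ht. rewrite Cmod_R.
    apply Rabs_Im_taylor_coef_2_le, Ht. }
  apply (f_equal Re) in Hb. change (Im (taylor_coef G 2) = 0) in Hb.
  pose proof Re_taylor_coef_2.
  destruct (taylor_coef G 2). unfold Re, Im in *. simpl in *. subst. reflexivity.
Qed.

End BoundedRealPart.

Theorem theorem1 (F : C -> C) :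
  (forall z : C, in_disc z -> 0 <= Re (F z) <= 1) ->
  holomorphic_on_disc (fun z => Cplus (F z) (Cmult z (Cconj (F z)))) ->
  exists c : C, forall z : C, in_disc z -> F z = c.
Proof.
  intros HF HH. pose proof (holomorphic_on_disc_Cdiff _ HH) as HG.
  exists (F 0%C). intros z Hz.
  pose proof (taylor_difference F HF HG z Hz) as D.
  rewrite (taylor_coef_2_eq0 F HF HG) in D.
  assert (H2PI : RtoC (2 * PI) <> 0%C) by (pose proof PI_RGT_0; intros K; injection K; lra).
  apply Ceq_minus, (plus_z_conj_eq0 z); [exact Hz|].
  transitivity (/ RtoC (2 * PI) * (0 * z / (1 - z)))%C.
  - rewrite D. field. exact H2PI.
  - unfold Cdiv. ring.
Qed.
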